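(* Let $d\in\mathbb{N}$ and let $S^0_{\infty,1}B(\mathbb{T}^d)$ be normed with respect to an admissible one-dimensional $\psi$. Then there are continuous embeddings $$\mathcal{A}(\mathbb{T}^d)\hookrightarrow S^0_{\infty,1}B(\mathbb{T}^d)\hookrightarrow C(\mathbb{T}^d),$$ and both embedding operators have norm exactly one.
   Context: $\mathbb{T}^d=[0,2\pi)^d$ with the normalized Lebesgue measure $(2\pi)^{-d}dx$; $\hat f(k)=(2\pi)^{-d}\int_{\mathbb{T}^d}f(x)e^{-ik\cdot x}dx$. Periodic distributions $g$ are identified with formal Fourier series $\sum_k\hat g(k)e^{ik\cdot x}$ with polynomially bounded coefficients. Admissible one-dimensional $\psi$: real-valued nonnegative $\psi\in C_0^\infty(\mathbb{R})$ with support in $[-3/2,3/2]$, $\psi(\xi/2)-\psi(\xi)\ge0$ for all $\xi$, $\psi=1$ on $[-1,1]$; $\varphi_0=\psi$, $\varphi_j(\xi)=\psi(2^{-j}\xi)-\psi(2^{-j+1}\xi)$ for $j\ge1$. For $1\le p,q\le\infty$, $t\in\mathbb{R}$, $S^t_{p,q}B(\mathbb{T}^d)$ is the space of periodic distributions $g$ with $\|g|S^t_{p,q}B(\mathbb{T}^d)\|=\big(\sum_{\ell\in\mathbb{N}_0^d}2^{|\ell|_1tq}\|\sum_{k\in\mathbb{Z}^d}\prod_{j=1}^d\varphi_{\ell_j}(k_j)\hat g(k)e^{ik\cdot x}|L_p(\mathbb{T}^d)\|^q\big)^{1/q}<\infty$ (usual modification for $q=\infty$), $|\ell|_1=\ell_1+\dots+\ell_d$.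 $\mathcal{A}(\mathbb{T}^d)$: $f\in L_1$ with $\|f|\mathcal{A}\|=\sum_k|\hat f(k)|<\infty$. $C(\mathbb{T}^d)$: continuous periodic functions, sup-norm; elements with continuous representatives are identified with them. *)

From Stdlib Require Import Reals Lra Lia ZArith List ClassicalEpsilon.
Import ListNotations.
Open Scope R_scope.

(* Supremum of a set of reals (junk value 0 if empty or unbounded). *)
Definition Rsup (E : R -> Prop) : R :=
  match excluded_middle_informative (bound E /\ exists x, E x) with
  | left H => proj1_sig (completeness E (proj1 H) (proj2 H))
  | right _ => 0
  end.

(* Limit of a real sequence (junk value 0 if divergent). *)
Definition Rlim (u : nat -> R) : R :=
  match excluded_middle_informative (exists l, Un_cv u l) with
  | left H => proj1_sig (constructive_indefinite_description _ H)
  | right _ => 0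
  end.

Definition Rsum (l : list R) : R := fold_right Rplus 0 l.

Definition Cpx := (R * R)%type.
Definition Cadd (a b : Cpx) : Cpx := (fst a + fst b, snd a + snd b).
Definition Csub (a b : Cpx) : Cpx := (fst a - fst b, snd a - snd b).
Definition Cmul (a b : Cpx) : Cpx :=
  (fst a * fst b - snd a * snd b, fst a * snd b + snd a * fst b).
Definition Cscale (r : R) (a : Cpx) : Cpx := (r * fst a, r * snd a).
Definition Cmod (a : Cpx) : R := sqrt (fst a ^ 2 + snd a ^ 2).
Definition Cexpi (t : R) : Cpx := (cos t, sin t).
Definition Csum (l : list Cpx) : Cpx := fold_right Cadd (0, 0) l.
Definition Clim (u : nat -> Cpx) : Cpx :=
  (Rlim (fun n => fst (u n)), Rlim (fun n => snd (u n))).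

(** * Vectors in Z^d, R^d, N_0^d as lists of length d *)

Fixpoint lbox {A : Type} (d : nat) (vals : list A) : list (list A) :=
  match d with
  | O => [nil]
  | S d' => flat_map (fun z => map (cons z) (lbox d' vals)) vals
  end.

Definition zrange (N : nat) : list Z :=
  map (fun i => (Z.of_nat i - Z.of_nat N)%Z) (seq 0 (2 * N + 1)).

Definition zbox (d N : nat) : list (list Z) := lbox d (zrange N).

Definition dot (k : list Z) (x : list R) : R :=
  Rsum (map (fun p => IZR (fst p) * snd p) (combine k x)).

(* Sum over Z^d of a family, as the limit of the sums over the cubes
   {-N..N}^d (used only for finitely supported or absolutely summable
   families, where this is the unambiguous value of the sum). *)
Definition Zsum (d : nat) (a : list Z -> Cpx) : Cpx :=
  Clim (fun N => Csum (map a (zbox d N))).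

Definition smooth (f : R -> R) : Prop :=
  exists D : nat -> R -> R,
    D O = f /\ forall n x, derivable_pt_lim (D n) x (D (S n) x).

Definition admissible (psi : R -> R) : Prop :=
  smooth psi /\
  (forall xi, 3/2 < Rabs xi -> psi xi = 0) /\
  (forall xi, 0 <= psi xi) /\
  (forall xi, psi (xi / 2) - psi xi >= 0) /\
  (forall xi, -1 <= xi <= 1 -> psi xi = 1).

Definition phi (psi : R -> R) (j : nat) (xi : R) : R :=
  match j with
  | O => psi xi
  | S j' => psi (xi / 2 ^ j) - psi (xi / 2 ^ j')
  end.

Definition phiprod (psi : R -> R) (l : list nat) (k : list Z) : R :=
  fold_right Rmult 1 (map (fun p => phi psi (fst p) (IZR (snd p))) (combine l k)).

(* sup norm of a function on R^d (= L_infty norm for continuous functions) *)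
Definition supnorm (d : nat) (F : list R -> Cpx) : R :=
  Rsup (fun r => exists x, length x = d /\ r = Cmod (F x)).

Definition bounded_fun (d : nat) (F : list R -> Cpx) : Prop :=
  bound (fun r => exists x, length x = d /\ r = Cmod (F x)).

(* A periodic distribution is given by its Fourier coefficients
   g : Z^d -> C with polynomially bounded coefficients. *)
Definition poly_bounded (d : nat) (g : list Z -> Cpx) : Prop :=
  exists (C : R) (m : nat), forall k, length k = d ->
    Cmod (g k) <= C * (1 + Rsum (map (fun z => Rabs (IZR z)) k)) ^ m.

Definition block (psi : R -> R) (d : nat) (g : list Z -> Cpx) (l : list nat)
  : list R -> Cpx :=
  fun x => Zsum d (fun k => Cscale (phiprod psi l k) (Cmul (g k) (Cexpi (dot k x)))).

(* partial sums of  sum_{l in N_0^d} 2^{|l|_1 * 0} || block_l |L_infty|| *)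
Definition S_partial (psi : R -> R) (d : nat) (g : list Z -> Cpx) (N : nat) : R :=
  Rsum (map (fun l => supnorm d (block psi d g l)) (lbox d (seq 0 (S N)))).

Definition in_S (psi : R -> R) (d : nat) (g : list Z -> Cpx) : Prop :=
  poly_bounded d g /\
  (forall l, length l = d -> bounded_fun d (block psi d g l)) /\
  bound (fun r => exists N, r = S_partial psi d g N).

Definition normS (psi : R -> R) (d : nat) (g : list Z -> Cpx) : R :=
  Rsup (fun r => exists N, r = S_partial psi d g N).

(* Wiener algebra A(T^d), identified with the Fourier coefficients *)
Definition A_partial (d : nat) (g : list Z -> Cpx) (N : nat) : R :=
  Rsum (map (fun k => Cmod (g k)) (zbox d N)).

Definition in_A (d : nat) (g : list Z -> Cpx) : Prop :=
  bound (fun r => exists N, r = A_partial d g N).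

Definition normA (d : nat) (g : list Z -> Cpx) : R :=
  Rsup (fun r => exists N, r = A_partial d g N).

Definition shift2pi (x : list R) (j : nat) : list R :=
  firstn j x ++ (nth j x 0 + 2 * PI) :: skipn (S j) x.

Definition contT (d : nat) (f : list R -> Cpx) : Prop :=
  (forall x, length x = d -> forall eps, 0 < eps -> exists delta, 0 < delta /\
     forall y, length y = d ->
       (forall j, (j < d)%nat -> Rabs (nth j y 0 - nth j x 0) < delta) ->
       Cmod (Csub (f y) (f x)) < eps) /\
  (forall x j, length x = d -> (j < d)%nat -> f (shift2pi x j) = f x).

Definition grid (N : nat) (j : list nat) : list R :=
  map (fun ji => 2 * PI * INR ji / INR N) j.

(* fhat(k) = (2 pi)^{-d} int_{T^d} f(x) e^{-ik.x} dx, as the limit of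
   Riemann sums over the uniform grid (2 pi / N) {0..N-1}^d *)
Definition fcoef (d : nat) (f : list R -> Cpx) (k : list Z) : Cpx :=
  Clim (fun N => Cscale (/ (INR N ^ d))
    (Csum (map (fun j => Cmul (f (grid N j)) (Cexpi (- dot k (grid N j))))
               (lbox d (seq 0 N))))).

(* A function g in A(T^d) has finitely supported blocks, and the blocks with all l_j <= N
   telescope to the multipliers prod_j psi (k_j / 2^N) in [0, 1]; hence the partial sums of
   the S^0_{oo,1}B-norm are dominated by sum_k |g k|.  For g in S^0_{oo,1}B the partial sums
   of the blocks are trigonometric polynomials converging uniformly, so their limit F is a
   continuous periodic function bounded by the S-norm; its Riemann-sum Fourier coefficients
   are those of the partial sums, which coincide with g on ever larger cubes.  A continuous
   periodic function is determined by its coefficients, because it is the uniform limit of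
   its averages against the positive kernels prod_j ((1 + cos t_j) / 2)^M; so F is the only
   continuous representative.  The constant function 1 has norm one in all three spaces. *)

From Stdlib Require Import Reals Lra Lia ZArith List Ring_theory Ring FinFun
  Classical ClassicalEpsilon FunctionalExtensionality.
From Coquelicot Require Complex Rcomplements.
Import ListNotations.
Open Scope R_scope.

Ltac Cpx_ring :=
  unfold Cadd, Csub, Cmul, Cscale; apply injective_projections; cbn [fst snd]; ring.

Lemma Cmod_ge_0 a : 0 <= Cmod a.
Proof. exact (Complex.Cmod_ge_0 a). Qed.

Lemma Cmod_triangle a b : Cmod (Cadd a b) <= Cmod a + Cmod b.
Proof. exact (Complex.Cmod_triangle a b). Qed.

Lemma Cmod_mult a b : Cmod (Cmul a b) = Cmod a * Cmod b.
Proof. exact (Complex.Cmod_mult a b). Qed.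

Lemma Cmod_real r : Cmod (r, 0) = Rabs r.
Proof. exact (Complex.Cmod_R r). Qed.

Lemma Cmod_0 : Cmod (0, 0) = 0.
Proof. rewrite Cmod_real. apply Rabs_R0. Qed.

Lemma Cmod_1 : Cmod (1, 0) = 1.
Proof. rewrite Cmod_real. apply Rabs_R1. Qed.

Lemma Rabs_fst_le_Cmod a : Rabs (fst a) <= Cmod a.
Proof. eapply Rle_trans; [apply Rmax_l | apply (Complex.Rmax_Cmod a)]. Qed.

Lemma Rabs_snd_le_Cmod a : Rabs (snd a) <= Cmod a.
Proof. eapply Rle_trans; [apply Rmax_r | apply (Complex.Rmax_Cmod a)]. Qed.

Lemma Cmod_le_Rabs_fst_snd a : Cmod a <= Rabs (fst a) + Rabs (snd a).
Proof.
  destruct a as [x y]; unfold Cmod; cbn [fst snd].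
  rewrite <- (sqrt_Rsqr (Rabs x + Rabs y)) by (pose proof (Rabs_pos x); pose proof (Rabs_pos y); lra).
  apply sqrt_le_1_alt. pose proof (Rabs_pos x); pose proof (Rabs_pos y).
  pose proof (Rsqr_abs x); pose proof (Rsqr_abs y). unfold Rsqr in *. nra.
Qed.

Lemma Cmod_eq_0 a : Cmod a = 0 -> a = (0, 0).
Proof. exact (Complex.Cmod_eq_0 a). Qed.

Lemma Cmod_Cscale r a : Cmod (Cscale r a) = Rabs r * Cmod a.
Proof.
  replace (Cscale r a) with (Cmul (r, 0) a) by Cpx_ring.
  rewrite Cmod_mult, Cmod_real. reflexivity.
Qed.

Lemma Cmod_Csub_sym a b : Cmod (Csub a b) = Cmod (Csub b a).
Proof. unfold Cmod, Csub; cbn [fst snd]. f_equal. ring. Qed.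

Lemma Cmod_Csub_0_l a : Cmod (Csub (0, 0) a) = Cmod a.
Proof. unfold Cmod, Csub; cbn [fst snd]. f_equal. ring. Qed.

Lemma Cmod_Csub_triangle a b c : Cmod (Csub a c) <= Cmod (Csub a b) + Cmod (Csub b c).
Proof.
  replace (Csub a c) with (Cadd (Csub a b) (Csub b c)) by Cpx_ring.
  apply Cmod_triangle.
Qed.

Lemma Cmod_Csub_le a b : Cmod (Csub a b) <= Cmod a + Cmod b.
Proof.
  replace (Csub a b) with (Cadd a (Cscale (-1) b)) by Cpx_ring.
  eapply Rle_trans; [apply Cmod_triangle|]. rewrite Cmod_Cscale, Rabs_left1 by lra. lra.
Qed.

Lemma Csub_diag a : Csub a a = (0, 0).
Proof. Cpx_ring. Qed.

Lemma Cmod_Cexpi t : Cmod (Cexpi t) = 1.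
Proof.
  unfold Cmod, Cexpi; cbn [fst snd].
  replace (cos t ^ 2 + sin t ^ 2) with 1 by (pose proof (sin2_cos2 t); unfold Rsqr in *; nra).
  apply sqrt_1.
Qed.

Lemma Cexpi_0 : Cexpi 0 = (1, 0).
Proof. unfold Cexpi. rewrite cos_0, sin_0. reflexivity. Qed.

Lemma Cexpi_add a b : Cexpi (a + b) = Cmul (Cexpi a) (Cexpi b).
Proof. unfold Cexpi, Cmul; cbn [fst snd]. rewrite cos_plus, sin_plus. f_equal; ring. Qed.

Lemma Cexpi_period t n : Cexpi (t + 2 * PI * IZR n) = Cexpi t.
Proof.
  assert (Hnat : forall t m, Cexpi (t + 2 * PI * INR m) = Cexpi t).
  { intros s m. unfold Cexpi.
    replace (s + 2 * PI * INR m) with (s + 2 * INR m * PI) by ring.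
    rewrite cos_period, sin_period. reflexivity. }
  destruct (Z_le_gt_dec 0 n).
  - rewrite <- (Z2Nat.id n), <- INR_IZR_INZ by lia. apply Hnat.
  - rewrite <- (Hnat (t + 2 * PI * IZR n) (Z.to_nat (- n))).
    rewrite INR_IZR_INZ, Z2Nat.id, opp_IZR by lia. f_equal; ring.
Qed.

Lemma Rabs_sin_le x : Rabs (sin x) <= Rabs x.
Proof.
  assert (Hpos : forall y, 0 < y -> Rabs (sin y) <= y).
  { intros y Hy. pose proof (sin_lt_x y Hy). pose proof (SIN_bound y).
    destruct (Rle_dec y 1).
    - assert (0 <= sin y) by (apply sin_ge_0; pose proof PI2_3_2; lra).
      rewrite Rabs_right; lra.
    - unfold Rabs; destruct Rcase_abs; lra. }
  destruct (Rtotal_order x 0) as [H | [-> | H]].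
  - rewrite <- Rabs_Ropp, <- sin_neg, (Rabs_left x H). apply Hpos; lra.
  - rewrite sin_0. lra.
  - rewrite (Rabs_right x) by lra. apply Hpos; lra.
Qed.

(* |e^{ia} - e^{ib}|^2 = 2 - 2 cos (a - b) = 4 sin^2 ((a - b)/2). *)
Lemma Cmod_Cexpi_sub_le a b : Cmod (Csub (Cexpi a) (Cexpi b)) <= Rabs (a - b).
Proof.
  unfold Cmod, Csub, Cexpi; cbn [fst snd].
  rewrite <- (sqrt_Rsqr (Rabs (a - b))) by apply Rabs_pos.
  apply sqrt_le_1_alt.
  replace ((cos a - cos b) ^ 2 + (sin a - sin b) ^ 2) with (2 - 2 * cos (2 * ((a - b) / 2))).
  2:{ replace (2 * ((a - b) / 2)) with (a - b) by field. rewrite cos_minus.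
      pose proof (sin2_cos2 a). pose proof (sin2_cos2 b). unfold Rsqr in *. nra. }
  rewrite cos_2a_sin.
  pose proof (Rabs_sin_le ((a - b) / 2)) as H.
  pose proof (Rabs_pos (sin ((a - b) / 2))).
  pose proof (Rsqr_abs (sin ((a - b) / 2))).
  replace (Rabs (a - b)) with (2 * Rabs ((a - b) / 2))
    by (unfold Rdiv; rewrite Rabs_mult, (Rabs_right (/ 2)) by lra; field).
  unfold Rsqr in *. nra.
Qed.

Definition zapp {A B : Type} (fs : list (A -> B)) (l : list A) : list B :=
  map (fun p => fst p (snd p)) (combine fs l).

Lemma In_lbox {A : Type} d (S : list A) l :
  In l (lbox d S) <-> length l = d /\ (forall z, In z l -> In z S).
Proof.
  revert l; induction d as [|d IH]; intros l; simpl.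
  - split.
    + intros [<- | []]; split; [reflexivity | intros z []].
    + intros [H _]. destruct l; [auto | discriminate].
  - rewrite in_flat_map. split.
    + intros [z [Hz Hl]]. apply in_map_iff in Hl. destruct Hl as [l' [<- Hl']].
      apply IH in Hl'. destruct Hl' as [H1 H2]. simpl. split; [lia|]. intros w [<- | Hw]; auto.
    + intros [H1 H2]. destruct l as [|z l']; [discriminate|]. exists z. split; [apply H2; left; auto|].
      apply in_map, IH. split; [simpl in H1; lia|]. intros w Hw; apply H2; right; auto.
Qed.

Lemma In_lbox_length {A : Type} d (S : list A) l : In l (lbox d S) -> length l = d.
Proof. intro H. apply In_lbox in H. tauto. Qed.

Section SemiringSums.

Context {M : Type} {zero one : M} {add mul : M -> M -> M}.
Context (SR : semi_ring_theory zero one add mul eq).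
Add Ring M_semiring : SR.
Local Notation sum := (fold_right add zero).
Local Notation prod := (fold_right mul one).

Lemma sum_app l1 l2 : sum (l1 ++ l2) = add (sum l1) (sum l2).
Proof. induction l1 as [|a l1 IH]; simpl; [|rewrite IH]; ring. Qed.

Lemma sum_map_add {A : Type} (f g : A -> M) l :
  sum (map (fun x => add (f x) (g x)) l) = add (sum (map f l)) (sum (map g l)).
Proof. induction l as [|a l IH]; simpl; [|rewrite IH]; ring. Qed.

Lemma sum_map_zero {A : Type} (l : list A) : sum (map (fun _ => zero) l) = zero.
Proof. induction l as [|a l IH]; simpl; [|rewrite IH]; ring. Qed.

Lemma sum_map_mul_l {A : Type} (f : A -> M) c l :
  sum (map (fun x => mul c (f x)) l) = mul c (sum (map f l)).
Proof. induction l as [|a l IH]; simpl; [|rewrite IH]; ring. Qed.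

Lemma sum_flat_map {A B : Type} (f : B -> M) (g : A -> list B) l :
  sum (map f (flat_map g l)) = sum (map (fun a => sum (map f (g a))) l).
Proof. induction l as [|a l IH]; simpl; [|rewrite map_app, sum_app, IH]; reflexivity. Qed.

Lemma sum_map_swap {A B : Type} (f : A -> B -> M) la lb :
  sum (map (fun a => sum (map (f a) lb)) la) =
  sum (map (fun b => sum (map (fun a => f a b) la)) lb).
Proof.
  induction la as [|a la IH]; simpl.
  - symmetry. apply sum_map_zero.
  - rewrite IH, <- sum_map_add. reflexivity.
Qed.

Lemma sum_lbox_prod {A : Type} (S : list A) (fs : list (A -> M)) :
  sum (map (fun l => prod (zapp fs l)) (lbox (length fs) S)) =
  prod (map (fun f => sum (map f S)) fs).
Proof.
  induction fs as [|f fs IH]; simpl; [ring|].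
  rewrite sum_flat_map, <- IH.
  set (X := sum (map _ (lbox (length fs) S))).
  transitivity (sum (map (fun a => mul (f a) X) S)).
  - f_equal. apply map_ext. intro a. rewrite map_map. unfold X. rewrite <- sum_map_mul_l.
    reflexivity.
  - rewrite (map_ext (fun a => mul (f a) X) (fun a => mul X (f a))) by (intro; ring).
    rewrite sum_map_mul_l. ring.
Qed.

Lemma sum_map_filter {A : Type} (p : A -> bool) (G : A -> M) l :
  (forall z, In z l -> p z = false -> G z = zero) -> sum (map G l) = sum (map G (filter p l)).
Proof.
  induction l as [|a l IH]; intros H; simpl; [reflexivity|].
  destruct (p a) eqn:E; simpl; rewrite IH by (intros; apply H; simpl; auto);
    [reflexivity | rewrite H by (simpl; auto); ring].
Qed.

Lemma sum_lbox_filter {A : Type} d (S : list A) (p : A -> bool) (a : list A -> M) :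
  (forall l, length l = d -> (exists z, In z l /\ p z = false) -> a l = zero) ->
  sum (map a (lbox d S)) = sum (map a (lbox d (filter p S))).
Proof.
  revert a; induction d as [|d IH]; intros a H; simpl; [reflexivity|].
  rewrite !sum_flat_map, (sum_map_filter p).
  - f_equal. apply map_ext_in. intros z Hz. apply filter_In in Hz. rewrite !map_map.
    apply (IH (fun l => a (z :: l))). intros l Hl [w [Hw Hp]].
    apply H; simpl; [lia|]. exists w; auto.
  - intros z _ Hz. rewrite map_map, (map_ext_in _ (fun _ => zero)), sum_map_zero; [reflexivity|].
    intros l Hl. apply H; simpl; [apply In_lbox_length in Hl; lia|]. exists z; simpl; auto.
Qed.

Lemma sum_lbox_split {A : Type} d (S : list A) (p : A -> bool) (a : list A -> M) :
  sum (map a (lbox d S)) =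
  add (sum (map a (lbox d (filter p S))))
      (sum (map (fun l => if forallb p l then zero else a l) (lbox d S))).
Proof.
  rewrite (map_ext (fun l => a l)
    (fun l => add (if forallb p l then a l else zero) (if forallb p l then zero else a l)))
    by (intro l; destruct (forallb p l); ring).
  rewrite sum_map_add, (sum_lbox_filter d S p (fun l => if forallb p l then a l else zero)).
  - f_equal. f_equal. apply map_ext_in. intros l Hl. apply In_lbox in Hl.
    replace (forallb p l) with true; [reflexivity|]. symmetry. apply forallb_forall.
    intros z Hz. apply (proj2 Hl), filter_In in Hz. tauto.
  - intros l _ [z [Hz Hp]]. replace (forallb p l) with false; [reflexivity|].
    symmetry. apply Bool.not_true_iff_false. rewrite forallb_forall. intro H.
    rewrite H in Hp; [discriminate | exact Hz].
Qed.

Lemma sum_delta {A : Type} (eq_dec : forall x y : A, {x = y} + {x <> y}) (c : A -> M) l k :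
  NoDup l -> In k l -> sum (map (fun m => if eq_dec m k then c m else zero) l) = c k.
Proof.
  induction 1 as [|x l Hx Hl IH]; simpl; [intros []|]. intros [<- | Hin].
  - destruct (eq_dec x x) as [_ | []]; [|reflexivity].
    rewrite (map_ext_in _ (fun _ => zero)), sum_map_zero; [ring|].
    intros m Hm. destruct (eq_dec m x); [subst; contradiction | reflexivity].
  - destruct (eq_dec x k); [subst; contradiction|]. rewrite IH by exact Hin. ring.
Qed.

End SemiringSums.

Definition Rprod (l : list R) : R := fold_right Rmult 1 l.
Definition Cprod (l : list Cpx) : Cpx := fold_right Cmul (1, 0) l.

Lemma R_srt : semi_ring_theory 0 1 Rplus Rmult eq.
Proof. constructor; intros; ring. Qed.

Lemma Cpx_srt : semi_ring_theory (0, 0) (1, 0) Cadd Cmul eq.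
Proof. constructor; intros; Cpx_ring. Qed.

Lemma Rsum_app l1 l2 : Rsum (l1 ++ l2) = Rsum l1 + Rsum l2.
Proof. exact (sum_app R_srt l1 l2). Qed.

Lemma Csum_app l1 l2 : Csum (l1 ++ l2) = Cadd (Csum l1) (Csum l2).
Proof. exact (sum_app Cpx_srt l1 l2). Qed.

Lemma Rsum_map_add {A : Type} (f g : A -> R) l :
  Rsum (map (fun x => f x + g x) l) = Rsum (map f l) + Rsum (map g l).
Proof. exact (sum_map_add R_srt f g l). Qed.

Lemma Rsum_map_mult_l {A : Type} (f : A -> R) c l :
  Rsum (map (fun x => c * f x) l) = c * Rsum (map f l).
Proof. exact (sum_map_mul_l R_srt f c l). Qed.

Lemma Csum_map_mul_l {A : Type} (f : A -> Cpx) c l :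
  Csum (map (fun x => Cmul c (f x)) l) = Cmul c (Csum (map f l)).
Proof. exact (sum_map_mul_l Cpx_srt f c l). Qed.

Lemma Rsum_map_swap {A B : Type} (f : A -> B -> R) la lb :
  Rsum (map (fun a => Rsum (map (f a) lb)) la) =
  Rsum (map (fun b => Rsum (map (fun a => f a b) la)) lb).
Proof. exact (sum_map_swap R_srt f la lb). Qed.

Lemma Csum_map_swap {A B : Type} (f : A -> B -> Cpx) la lb :
  Csum (map (fun a => Csum (map (f a) lb)) la) =
  Csum (map (fun b => Csum (map (fun a => f a b) la)) lb).
Proof. exact (sum_map_swap Cpx_srt f la lb). Qed.

Lemma Rsum_lbox_prod {A : Type} (S : list A) (fs : list (A -> R)) :
  Rsum (map (fun l => Rprod (zapp fs l)) (lbox (length fs) S)) =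
  Rprod (map (fun f => Rsum (map f S)) fs).
Proof. exact (sum_lbox_prod R_srt S fs). Qed.

Lemma Csum_lbox_prod {A : Type} (S : list A) (fs : list (A -> Cpx)) :
  Csum (map (fun l => Cprod (zapp fs l)) (lbox (length fs) S)) =
  Cprod (map (fun f => Csum (map f S)) fs).
Proof. exact (sum_lbox_prod Cpx_srt S fs). Qed.

Lemma Rsum_lbox_split {A : Type} d (S : list A) (p : A -> bool) (a : list A -> R) :
  Rsum (map a (lbox d S)) =
  Rsum (map a (lbox d (filter p S))) +
  Rsum (map (fun l => if forallb p l then 0 else a l) (lbox d S)).
Proof. exact (sum_lbox_split R_srt d S p a). Qed.

Lemma Csum_lbox_split {A : Type} d (S : list A) (p : A -> bool) (a : list A -> Cpx) :
  Csum (map a (lbox d S)) =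
  Cadd (Csum (map a (lbox d (filter p S))))
       (Csum (map (fun l => if forallb p l then (0, 0) else a l) (lbox d S))).
Proof. exact (sum_lbox_split Cpx_srt d S p a). Qed.

Lemma Csum_lbox_filter {A : Type} d (S : list A) (p : A -> bool) (a : list A -> Cpx) :
  (forall l, length l = d -> (exists z, In z l /\ p z = false) -> a l = (0, 0)) ->
  Csum (map a (lbox d S)) = Csum (map a (lbox d (filter p S))).
Proof. exact (sum_lbox_filter Cpx_srt d S p a). Qed.

Lemma Csum_delta {A : Type} (eq_dec : forall x y : A, {x = y} + {x <> y}) (c : A -> Cpx) l k :
  NoDup l -> In k l -> Csum (map (fun m => if eq_dec m k then c m else (0, 0)) l) = c k.
Proof. exact (sum_delta Cpx_srt eq_dec c l k). Qed.

Lemma Rsum_ext {A : Type} (f g : A -> R) l :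
  (forall x, In x l -> f x = g x) -> Rsum (map f l) = Rsum (map g l).
Proof. intro H. f_equal. apply map_ext_in. exact H. Qed.

Lemma Csum_ext {A : Type} (f g : A -> Cpx) l :
  (forall x, In x l -> f x = g x) -> Csum (map f l) = Csum (map g l).
Proof. intro H. f_equal. apply map_ext_in. exact H. Qed.

Lemma Rsum_le {A : Type} (f g : A -> R) l :
  (forall x, In x l -> f x <= g x) -> Rsum (map f l) <= Rsum (map g l).
Proof.
  induction l as [|a l IH]; simpl; intros H; [lra|].
  pose proof (H a (or_introl eq_refl)). pose proof (IH (fun x h => H x (or_intror h))). lra.
Qed.

Lemma Rsum_nonneg {A : Type} (f : A -> R) l :
  (forall x, In x l -> 0 <= f x) -> 0 <= Rsum (map f l).
Proof.
  intro H. rewrite <- (sum_map_zero R_srt l). apply Rsum_le. exact H.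
Qed.

Lemma Rsum_const {A : Type} (l : list A) c : Rsum (map (fun _ => c) l) = INR (length l) * c.
Proof. induction l as [|a l IH]; [simpl; ring|]. simpl length. rewrite S_INR. simpl. rewrite IH. ring. Qed.

Lemma Rsum_In_le {A : Type} (f : A -> R) l x :
  (forall y, In y l -> 0 <= f y) -> In x l -> f x <= Rsum (map f l).
Proof.
  induction l as [|a l IH]; simpl; intros H Hx; [contradiction|].
  pose proof (Rsum_nonneg f l (fun y h => H y (or_intror h))).
  pose proof (H a (or_introl eq_refl)).
  destruct Hx as [-> | Hin]; [lra|].
  pose proof (IH (fun y h => H y (or_intror h)) Hin). lra.
Qed.

Lemma Cmod_Csum_le {A : Type} (f : A -> Cpx) l :
  Cmod (Csum (map f l)) <= Rsum (map (fun x => Cmod (f x)) l).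
Proof.
  induction l as [|a l IH]; simpl; [rewrite Cmod_0; lra|].
  eapply Rle_trans; [apply Cmod_triangle | lra].
Qed.

Lemma Csum_map_sub {A : Type} (f g : A -> Cpx) l :
  Csum (map (fun x => Csub (f x) (g x)) l) = Csub (Csum (map f l)) (Csum (map g l)).
Proof. induction l as [|a l IH]; simpl; [|rewrite IH]; Cpx_ring. Qed.

Lemma Csum_map_Cscale_r {A : Type} (f : A -> Cpx) c l :
  Csum (map (fun x => Cscale c (f x)) l) = Cscale c (Csum (map f l)).
Proof. induction l as [|a l IH]; simpl; [|rewrite IH]; Cpx_ring. Qed.

Lemma Csum_map_Cscale_l {A : Type} (f : A -> R) z l :
  Csum (map (fun x => Cscale (f x) z) l) = Cscale (Rsum (map f l)) z.
Proof. induction l as [|a l IH]; simpl; [|rewrite IH]; Cpx_ring. Qed.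

Lemma Csum_map_mul_r {A : Type} (f : A -> Cpx) c l :
  Csum (map (fun x => Cmul (f x) c) l) = Cmul (Csum (map f l)) c.
Proof. induction l as [|a l IH]; simpl; [|rewrite IH]; Cpx_ring. Qed.

Lemma Csum_real {A : Type} (f : A -> R) l : Csum (map (fun x => (f x, 0)) l) = (Rsum (map f l), 0).
Proof. induction l as [|a l IH]; simpl; [|rewrite IH]; Cpx_ring. Qed.

Lemma fst_Csum {A : Type} (f : A -> Cpx) l : fst (Csum (map f l)) = Rsum (map (fun x => fst (f x)) l).
Proof. induction l as [|a l IH]; simpl; [|rewrite IH]; reflexivity. Qed.

Lemma Rprod_nonneg l : (forall x, In x l -> 0 <= x) -> 0 <= Rprod l.
Proof.
  induction l as [|a l IH]; intros H; unfold Rprod; simpl; [lra|].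
  apply Rmult_le_pos; [apply H; left; reflexivity | apply IH; intros; apply H; right; assumption].
Qed.

Lemma Rprod_le_1 l : (forall x, In x l -> 0 <= x <= 1) -> Rprod l <= 1.
Proof.
  induction l as [|a l IH]; simpl; intros H; unfold Rprod in *; simpl; [lra|].
  pose proof (H a (or_introl eq_refl)).
  assert (fold_right Rmult 1 l <= 1) by (apply IH; intros; apply H; right; assumption).
  assert (0 <= fold_right Rmult 1 l) by (apply Rprod_nonneg; intros; apply H; right; assumption).
  nra.
Qed.

Lemma Rprod_le_factor l a b :
  In a l -> (forall r, In r l -> 0 <= r <= 1) -> a <= b -> Rprod l <= b.
Proof.
  induction l as [|r l IH]; intros Ha Hr Hab; [contradiction|]. unfold Rprod in *; simpl.
  pose proof (Hr r (or_introl eq_refl)).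
  assert (0 <= fold_right Rmult 1 l) by (apply Rprod_nonneg; intros z Hz; apply Hr; right; exact Hz).
  assert (fold_right Rmult 1 l <= 1) by (apply Rprod_le_1; intros z Hz; apply Hr; right; exact Hz).
  destruct Ha as [-> | Ha]; [nra|].
  assert (fold_right Rmult 1 l <= b) by (apply IH; auto; intros z Hz; apply Hr; right; exact Hz).
  nra.
Qed.

Lemma Rprod_eq_0 l : In 0 l -> Rprod l = 0.
Proof.
  induction l as [|a l IH]; simpl; intros H; [contradiction|]. unfold Rprod in *; simpl.
  destruct H as [-> | H]; [ring | rewrite IH by exact H; ring].
Qed.

Lemma Rprod_eq_1 l : (forall r, In r l -> r = 1) -> Rprod l = 1.
Proof.
  induction l as [|a l IH]; simpl; intros H; unfold Rprod in *; simpl; [reflexivity|].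
  rewrite IH, (H a) by auto. ring.
Qed.

Lemma Rprod_const (c : R) {A : Type} (l : list A) : Rprod (map (fun _ => c) l) = c ^ length l.
Proof. induction l as [|a l IH]; unfold Rprod in *; simpl; [|rewrite IH]; reflexivity. Qed.

Lemma Cprod_real l : Cprod (map (fun r => (r, 0)) l) = (Rprod l, 0).
Proof.
  induction l as [|r l IH]; [reflexivity|]. unfold Cprod in *. simpl. rewrite IH.
  unfold Rprod. simpl. Cpx_ring.
Qed.

Lemma map_combine_swap {A B C : Type} (g : A -> B -> C) l k :
  map (fun p => g (fst p) (snd p)) (combine l k) = map (fun p => g (snd p) (fst p)) (combine k l).
Proof. revert k; induction l as [|a l IH]; intros [|b k]; simpl; [..| rewrite IH]; reflexivity. Qed.

Definition Ccv (u : nat -> Cpx) (L : Cpx) : Prop :=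
  forall eps, 0 < eps -> exists N, forall n, (n >= N)%nat -> Cmod (Csub (u n) L) < eps.

Lemma Rlim_eq u l : Un_cv u l -> Rlim u = l.
Proof.
  intro H. unfold Rlim. destruct (excluded_middle_informative _) as [E | E].
  - destruct (constructive_indefinite_description _ E) as [l' Hl']; simpl.
    eapply UL_sequence; eauto.
  - exfalso; apply E; eauto.
Qed.

Lemma Clim_eq u L : Ccv u L -> Clim u = L.
Proof.
  intro H. unfold Clim.
  assert (Hfst : Un_cv (fun n => fst (u n)) (fst L)).
  { intros e He. destruct (H e He) as [N HN]. exists N. intros n Hn.
    eapply Rle_lt_trans; [apply (Rabs_fst_le_Cmod (Csub (u n) L)) | apply HN, Hn]. }
  assert (Hsnd : Un_cv (fun n => snd (u n)) (snd L)).
  { intros e He. destruct (H e He) as [N HN]. exists N. intros n Hn.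
    eapply Rle_lt_trans; [apply (Rabs_snd_le_Cmod (Csub (u n) L)) | apply HN, Hn]. }
  rewrite (Rlim_eq _ _ Hfst), (Rlim_eq _ _ Hsnd). destruct L; reflexivity.
Qed.

Lemma Ccv_eventually_const u L : (exists N, forall n, (n >= N)%nat -> u n = L) -> Ccv u L.
Proof. intros [N HN] e He. exists N. intros n Hn. rewrite HN, Csub_diag, Cmod_0 by exact Hn. exact He. Qed.

Lemma Ccv_Cmod_Csub_le a u L e :
  Ccv u L -> (exists N, forall n, (n >= N)%nat -> Cmod (Csub a (u n)) <= e) -> Cmod (Csub a L) <= e.
Proof.
  intros H [N HN]. apply Rnot_lt_le. intro Hlt.
  destruct (H (Cmod (Csub a L) - e) ltac:(lra)) as [N' HN'].
  specialize (HN (max N N') ltac:(lia)). specialize (HN' (max N N') ltac:(lia)).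
  pose proof (Cmod_Csub_triangle a (u (max N N')) L). lra.
Qed.

Lemma Ccv_Cauchy u :
  (forall eps, 0 < eps -> exists N, forall n m, (n >= N)%nat -> (m >= N)%nat ->
     Cmod (Csub (u n) (u m)) < eps) ->
  exists L, Ccv u L.
Proof.
  intro H.
  assert (C1 : Cauchy_crit (fun n => fst (u n))).
  { intros e He. destruct (H e He) as [N HN]. exists N. intros n m Hn Hm.
    eapply Rle_lt_trans; [apply (Rabs_fst_le_Cmod (Csub (u n) (u m))) | apply HN; auto]. }
  assert (C2 : Cauchy_crit (fun n => snd (u n))).
  { intros e He. destruct (H e He) as [N HN]. exists N. intros n m Hn Hm.
    eapply Rle_lt_trans; [apply (Rabs_snd_le_Cmod (Csub (u n) (u m))) | apply HN; auto]. }
  destruct (R_complete _ C1) as [l1 H1]. destruct (R_complete _ C2) as [l2 H2].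
  exists (l1, l2). intros e He.
  destruct (H1 (e / 2) ltac:(lra)) as [N1 HN1]. destruct (H2 (e / 2) ltac:(lra)) as [N2 HN2].
  exists (max N1 N2). intros n Hn.
  specialize (HN1 n ltac:(lia)). specialize (HN2 n ltac:(lia)). unfold R_dist in *.
  eapply Rle_lt_trans; [apply Cmod_le_Rabs_fst_snd | simpl; lra].
Qed.

Lemma Ccv_Cadd u v L L' : Ccv u L -> Ccv v L' -> Ccv (fun n => Cadd (u n) (v n)) (Cadd L L').
Proof.
  intros H1 H2 e He.
  destruct (H1 (e / 2) ltac:(lra)) as [N1 HN1]. destruct (H2 (e / 2) ltac:(lra)) as [N2 HN2].
  exists (max N1 N2). intros n Hn. specialize (HN1 n ltac:(lia)). specialize (HN2 n ltac:(lia)).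
  replace (Csub (Cadd (u n) (v n)) (Cadd L L')) with (Cadd (Csub (u n) L) (Csub (v n) L'))
    by Cpx_ring.
  eapply Rle_lt_trans; [apply Cmod_triangle | lra].
Qed.

Lemma Ccv_Cmul_l c u L : Ccv u L -> Ccv (fun n => Cmul c (u n)) (Cmul c L).
Proof.
  intros H e He. pose proof (Cmod_ge_0 c).
  destruct (H (e / (Cmod c + 1))) as [N HN]; [apply Rdiv_lt_0_compat; lra|].
  exists N. intros n Hn. specialize (HN n Hn).
  replace (Csub (Cmul c (u n)) (Cmul c L)) with (Cmul c (Csub (u n) L)) by Cpx_ring.
  rewrite Cmod_mult. pose proof (Cmod_ge_0 (Csub (u n) L)).
  apply (Rmult_lt_compat_l (Cmod c + 1)) in HN; [|lra].
  replace ((Cmod c + 1) * (e / (Cmod c + 1))) with e in HN by (field; lra). nra.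
Qed.

Lemma Ccv_Cscale c u L : Ccv u L -> Ccv (fun n => Cscale c (u n)) (Cscale c L).
Proof.
  intro H. replace (Cscale c L) with (Cmul (c, 0) L) by Cpx_ring.
  replace (fun n => Cscale c (u n)) with (fun n => Cmul (c, 0) (u n))
    by (apply functional_extensionality; intro; Cpx_ring).
  apply Ccv_Cmul_l, H.
Qed.

Lemma Ccv_Csum {A : Type} (l : list A) (u : A -> nat -> Cpx) (L : A -> Cpx) :
  (forall a, In a l -> Ccv (u a) (L a)) ->
  Ccv (fun n => Csum (map (fun a => u a n) l)) (Csum (map L l)).
Proof.
  induction l as [|a l IH]; intros H; simpl.
  - apply Ccv_eventually_const. exists 0%nat. reflexivity.
  - apply Ccv_Cadd; [apply H; left; reflexivity | apply IH; intros; apply H; right; assumption].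
Qed.

Lemma Rsup_is_lub E : bound E -> (exists x, E x) -> is_lub E (Rsup E).
Proof.
  intros Hb Hne. unfold Rsup. destruct (excluded_middle_informative _) as [H | H].
  - destruct (completeness E (proj1 H) (proj2 H)) as [s Hs]; exact Hs.
  - exfalso; auto.
Qed.

Lemma Rsup_ub E x : bound E -> E x -> x <= Rsup E.
Proof. intros Hb Hx. apply (Rsup_is_lub E Hb (ex_intro _ x Hx)). exact Hx. Qed.

Lemma Rsup_le E b : (exists x, E x) -> (forall x, E x -> x <= b) -> Rsup E <= b.
Proof.
  intros Hne Hb. apply (Rsup_is_lub E); [exists b; exact Hb | exact Hne | exact Hb].
Qed.

Lemma Rsup_approx E eps :
  bound E -> (exists x, E x) -> 0 < eps -> exists x, E x /\ Rsup E - eps < x.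
Proof.
  intros Hb Hne He. apply NNPP. intro Hn.
  assert (Rsup E <= Rsup E - eps); [|lra].
  apply Rsup_le; [exact Hne|]. intros x Hx. apply Rnot_lt_le. intro Hlt. apply Hn. exists x; auto.
Qed.

Lemma length_lbox {A : Type} d (S : list A) : length (lbox d S) = (length S ^ d)%nat.
Proof.
  induction d as [|d IH]; simpl; [reflexivity|].
  enough (H : forall T, length (flat_map (fun z => map (cons z) (lbox d S)) T) =
                        (length T * length S ^ d)%nat) by apply H.
  induction T as [|z T IHT]; simpl; [reflexivity|].
  rewrite length_app, length_map, IHT, IH. reflexivity.
Qed.

Lemma NoDup_lbox {A : Type} d (S : list A) : NoDup S -> NoDup (lbox d S).
Proof.
  intro HS. induction d as [|d IH]; simpl; [constructor; [intros [] | constructor]|].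
  enough (H : forall T, NoDup T -> NoDup (flat_map (fun z => map (cons z) (lbox d S)) T))
    by (apply H, HS).
  induction 1 as [|z T Hz HT IHT]; simpl; [constructor|].
  apply NoDup_app.
  - apply Injective_map_NoDup; [intros l l' E; injection E; auto | exact IH].
  - exact IHT.
  - intros w H1 H2. apply in_map_iff in H1. destruct H1 as [l1 [<- _]].
    apply in_flat_map in H2. destruct H2 as [z' [Hz' H2]]. apply in_map_iff in H2.
    destruct H2 as [l2 [E _]]. injection E as -> _. contradiction.
Qed.

Lemma In_zrange N z : In z (zrange N) <-> (- Z.of_nat N <= z <= Z.of_nat N)%Z.
Proof.
  unfold zrange. rewrite in_map_iff. split.
  - intros [i [<- Hi]]. apply in_seq in Hi. lia.
  - intros H. exists (Z.to_nat (z + Z.of_nat N)). split; [lia|]. apply in_seq. lia.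
Qed.

Lemma NoDup_zrange N : NoDup (zrange N).
Proof.
  apply Injective_map_NoDup; [intros x y E; lia | apply seq_NoDup].
Qed.

Lemma NoDup_zbox d N : NoDup (zbox d N).
Proof. apply NoDup_lbox, NoDup_zrange. Qed.

Lemma In_zbox_length d N k : In k (zbox d N) -> length k = d.
Proof. apply In_lbox_length. Qed.

Lemma zrange_S Q : zrange (S Q) = (- Z.of_nat (S Q))%Z :: zrange Q ++ [Z.of_nat (S Q)].
Proof.
  unfold zrange. replace (2 * S Q + 1)%nat with (S (S (2 * Q + 1))) by lia.
  rewrite <- cons_seq, map_cons, seq_S, map_app, map_cons.
  apply (f_equal2 (@cons Z)); [lia|]. apply (f_equal2 (@app Z)).
  - rewrite <- seq_shift, map_map. apply map_ext. intros; lia.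
  - apply (f_equal2 (@cons Z)); [lia | reflexivity].
Qed.

Lemma filter_zrange Q Q' : (Q <= Q')%nat ->
  filter (fun z => (Z.abs z <=? Z.of_nat Q)%Z) (zrange Q') = zrange Q.
Proof.
  induction 1 as [|m Hm IH].
  - apply forallb_filter_id, forallb_forall. intros z Hz. apply In_zrange in Hz. lia.
  - rewrite zrange_S. cbn [filter]. rewrite filter_app. cbn [filter].
    replace (Z.abs (- Z.of_nat (S m)) <=? Z.of_nat Q)%Z with false by (symmetry; apply Z.leb_gt; lia).
    replace (Z.abs (Z.of_nat (S m)) <=? Z.of_nat Q)%Z with false by (symmetry; apply Z.leb_gt; lia).
    rewrite app_nil_r. exact IH.
Qed.

Lemma filter_seq_le L L' : (L <= L')%nat ->
  filter (fun s => s <=? L)%nat (seq 0 (S L')) = seq 0 (S L).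
Proof.
  intro H. replace (S L') with (S L + (L' - L))%nat by lia. rewrite seq_app, filter_app.
  rewrite forallb_filter_id by (apply forallb_forall; intros x Hx; apply in_seq in Hx; apply Nat.leb_le; lia).
  rewrite (filter_ext_in _ (fun _ => false)), filter_false, app_nil_r; [reflexivity|].
  intros x Hx. apply in_seq in Hx. apply Nat.leb_gt. lia.
Qed.

Fixpoint zmax (k : list Z) : nat :=
  match k with [] => 0%nat | z :: k' => Nat.max (Z.to_nat (Z.abs z)) (zmax k') end.

Lemma zmax_spec z k : In z k -> (Z.abs z <= Z.of_nat (zmax k))%Z.
Proof.
  induction k as [|a k IH]; simpl; [intros []|].
  intros [-> | H]; [lia|]. specialize (IH H). lia.
Qed.

Lemma In_zbox_zmax d k : length k = d -> In k (zbox d (zmax k)).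
Proof.
  intro Hk. apply In_lbox. split; [exact Hk|].
  intros z Hz. apply In_zrange. pose proof (zmax_spec z k Hz). lia.
Qed.

Definition upd (x : list R) (j : nat) (v : R) : list R := firstn j x ++ v :: skipn (S j) x.

Lemma length_upd x j v : (j < length x)%nat -> length (upd x j v) = length x.
Proof.
  revert x; induction j as [|j IH]; intros [|a x] H; simpl in *; try lia; auto.
  unfold upd in *; simpl. rewrite IH; [reflexivity | lia].
Qed.

Lemma nth_upd x j v i :
  (j < length x)%nat -> nth i (upd x j v) 0 = if Nat.eqb i j then v else nth i x 0.
Proof.
  revert x i; induction j as [|j IH]; intros [|a x] i H; simpl in *; try lia.
  - unfold upd; simpl. destruct i; reflexivity.
  - unfold upd in *; simpl. destruct i; [reflexivity|]. apply IH; lia.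
Qed.

Lemma dot_upd k x j v : (j < length x)%nat -> length k = length x ->
  dot k (upd x j v) = dot k x + IZR (nth j k 0%Z) * (v - nth j x 0).
Proof.
  revert k x; induction j as [|j IH]; intros [|z k] [|a x] H Hl; simpl in *; try lia.
  - unfold upd, dot; simpl. ring.
  - unfold upd, dot in *; simpl. rewrite IH by lia. ring.
Qed.

Lemma dot_shift2pi k x j : (j < length x)%nat -> length k = length x ->
  dot k (shift2pi x j) = dot k x + 2 * PI * IZR (nth j k 0%Z).
Proof.
  intros H1 H2. change (shift2pi x j) with (upd x j (nth j x 0 + 2 * PI)).
  rewrite dot_upd by assumption. ring.
Qed.

Definition zabs_sum (k : list Z) : R := Rsum (map (fun z => Rabs (IZR z)) k).

Lemma zabs_sum_nonneg k : 0 <= zabs_sum k.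
Proof. apply Rsum_nonneg. intros; apply Rabs_pos. Qed.

Lemma Rabs_dot_sub_le k x y delta : length x = length k -> length y = length k ->
  (forall i, (i < length k)%nat -> Rabs (nth i y 0 - nth i x 0) <= delta) ->
  Rabs (dot k y - dot k x) <= zabs_sum k * delta.
Proof.
  revert x y; induction k as [|z k IH]; intros [|a x] [|b y] Hx Hy H; simpl in *; try lia.
  - unfold dot, zabs_sum; simpl. rewrite Rminus_0_r, Rabs_R0. lra.
  - unfold dot, zabs_sum in *; simpl.
    specialize (IH x y ltac:(lia) ltac:(lia) (fun i hi => H (S i) ltac:(lia))).
    pose proof (H 0%nat ltac:(lia)) as H0; simpl in H0.
    set (sy := Rsum _). set (sx := Rsum _). fold sy sx in IH.
    replace (IZR z * b + sy - (IZR z * a + sx)) with (IZR z * (b - a) + (sy - sx)) by ring.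
    eapply Rle_trans; [apply Rabs_triang|]. rewrite Rabs_mult.
    assert (Rabs (IZR z) * Rabs (b - a) <= Rabs (IZR z) * delta)
      by (apply Rmult_le_compat_l; auto using Rabs_pos).
    lra.
Qed.

Definition trigpoly := list (list Z * Cpx).

Definition trig_eval (P : trigpoly) (x : list R) : Cpx :=
  Csum (map (fun mc => Cmul (snd mc) (Cexpi (dot (fst mc) x))) P).

Definition trig_dim (d : nat) (P : trigpoly) : Prop := forall mc, In mc P -> length (fst mc) = d.

Definition trig_lipschitz (P : trigpoly) : R :=
  Rsum (map (fun mc => Cmod (snd mc) * zabs_sum (fst mc)) P).

Lemma trig_lipschitz_nonneg P : 0 <= trig_lipschitz P.
Proof.
  apply Rsum_nonneg. intros. apply Rmult_le_pos; [apply Cmod_ge_0 | apply zabs_sum_nonneg].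
Qed.

Lemma trig_eval_lipschitz d P x y delta : trig_dim d P -> length x = d -> length y = d ->
  (forall i, (i < d)%nat -> Rabs (nth i y 0 - nth i x 0) <= delta) ->
  Cmod (Csub (trig_eval P y) (trig_eval P x)) <= trig_lipschitz P * delta.
Proof.
  intros HP Hx Hy H. unfold trig_eval, trig_lipschitz. rewrite <- Csum_map_sub.
  eapply Rle_trans; [apply Cmod_Csum_le|]. rewrite Rmult_comm, <- Rsum_map_mult_l.
  apply Rsum_le. intros [m c] Hmc. cbn [fst snd].
  replace (Csub (Cmul c (Cexpi (dot m y))) (Cmul c (Cexpi (dot m x))))
    with (Cmul c (Csub (Cexpi (dot m y)) (Cexpi (dot m x)))) by Cpx_ring.
  rewrite Cmod_mult. pose proof (Cmod_ge_0 c). pose proof (HP _ Hmc) as Hm; cbn [fst] in Hm.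
  pose proof (Rabs_dot_sub_le m x y delta ltac:(lia) ltac:(lia) ltac:(intros i hi; apply H; lia)).
  pose proof (Cmod_Cexpi_sub_le (dot m y) (dot m x)).
  apply Rle_trans with (Cmod c * (zabs_sum m * delta)); [|lra].
  apply Rmult_le_compat_l; lra.
Qed.

Lemma trig_eval_shift2pi d P x j : trig_dim d P -> length x = d -> (j < d)%nat ->
  trig_eval P (shift2pi x j) = trig_eval P x.
Proof.
  intros HP Hx Hj. apply Csum_ext. intros mc Hmc.
  rewrite dot_shift2pi, Cexpi_period by (try rewrite (HP mc Hmc); lia). reflexivity.
Qed.

Definition in_cube (d : nat) (x : list R) : Prop :=
  length x = d /\ forall i, (i < d)%nat -> 0 <= nth i x 0 <= 2 * PI.

Lemma grid_length N j : length (grid N j) = length j.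
Proof. apply length_map. Qed.

Lemma grid_nth N j i : (i < length j)%nat ->
  nth i (grid N j) 0 = 2 * PI * INR (nth i j 0%nat) / INR N.
Proof.
  intro H. unfold grid.
  rewrite (nth_indep _ 0 ((fun ji => 2 * PI * INR ji / INR N) 0%nat)) by (rewrite length_map; exact H).
  apply (map_nth (fun ji => 2 * PI * INR ji / INR N)).
Qed.

Lemma grid_in_cube d N j : In j (lbox d (seq 0 N)) -> in_cube d (grid N j).
Proof.
  intro H. apply In_lbox in H. destruct H as [Hl Hin]. rewrite <- Hl.
  split; [apply grid_length|]. intros i Hi. rewrite grid_nth by exact Hi.
  assert (Hj : In (nth i j 0%nat) (seq 0 N)) by (apply Hin, nth_In, Hi).
  apply in_seq in Hj. pose proof PI_RGT_0.
  assert (0 < INR N) by (apply lt_0_INR; lia).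
  assert (INR (nth i j 0%nat) <= INR N) by (apply le_INR; lia).
  pose proof (pos_INR (nth i j 0%nat)).
  split.
  - apply Rcomplements.Rdiv_le_0_compat; [apply Rmult_le_pos|]; lra.
  - apply Rcomplements.Rle_div_l; [lra|]. nra.
Qed.

Definition riemann_coef (d N : nat) (f : list R -> Cpx) (k : list Z) : Cpx :=
  Cscale (/ (INR N ^ d))
    (Csum (map (fun j => Cmul (f (grid N j)) (Cexpi (- dot k (grid N j)))) (lbox d (seq 0 N)))).

Lemma riemann_coef_sub_le d N f g k e : (1 <= N)%nat ->
  (forall j, In j (lbox d (seq 0 N)) -> Cmod (Csub (f (grid N j)) (g (grid N j))) <= e) ->
  Cmod (Csub (riemann_coef d N f k) (riemann_coef d N g k)) <= e.
Proof.
  intros HN H. unfold riemann_coef.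
  assert (HNd : 0 < INR N ^ d) by (apply pow_lt, lt_0_INR; lia).
  match goal with |- context [Csub (Cscale ?c ?A) (Cscale ?c ?B)] =>
    replace (Csub (Cscale c A) (Cscale c B)) with (Cscale c (Csub A B)) by Cpx_ring end.
  rewrite <- Csum_map_sub.
  rewrite (Csum_ext _ (fun j => Cmul (Csub (f (grid N j)) (g (grid N j))) (Cexpi (- dot k (grid N j)))))
    by (intros; Cpx_ring).
  rewrite Cmod_Cscale, Rabs_right by (apply Rle_ge, Rlt_le, Rinv_0_lt_compat, HNd).
  apply Rle_trans with (/ INR N ^ d * Rsum (map (fun _ => e) (lbox d (seq 0 N)))).
  - apply Rmult_le_compat_l; [apply Rlt_le, Rinv_0_lt_compat, HNd|].
    eapply Rle_trans; [apply Cmod_Csum_le | apply Rsum_le].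
    intros j Hj. rewrite Cmod_mult, Cmod_Cexpi, Rmult_1_r. apply H, Hj.
  - rewrite Rsum_const, length_lbox, length_seq, pow_INR. right. field. lra.
Qed.

Lemma Cexpi_neq_1 t : 0 < Rabs t < 2 * PI -> Cexpi t <> (1, 0).
Proof.
  intros Ht Hc. injection Hc as Hcos Hsin. pose proof PI_RGT_0.
  apply sin_eq_0_0 in Hsin. destruct Hsin as [k ->].
  rewrite Rabs_mult, (Rabs_right PI), <- abs_IZR in Ht by lra.
  assert (Hk : (k = 1 \/ k = -1)%Z).
  { destruct Ht as [H1 H2].
    assert (0 < Z.abs k < 2)%Z by (split; apply lt_IZR; simpl; nra). lia. }
  destruct Hk as [-> | ->].
  - rewrite Rmult_1_l, cos_PI in Hcos. lra.
  - replace (IZR (-1) * PI) with (- PI) in Hcos by ring. rewrite cos_neg, cos_PI in Hcos. lra.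
Qed.

Lemma Cexpi_geometric_sum t n :
  Cmul (Csum (map (fun s => Cexpi (INR s * t)) (seq 0 n))) (Csub (Cexpi t) (1, 0)) =
  Csub (Cexpi (INR n * t)) (1, 0).
Proof.
  induction n as [|n IH].
  - simpl. rewrite Rmult_0_l, Cexpi_0. Cpx_ring.
  - rewrite seq_S, map_app, Csum_app, S_INR, Rmult_plus_distr_r, Rmult_1_l, Cexpi_add.
    set (A := Csum _) in *. simpl. set (E := Cexpi (INR n * t)) in *.
    transitivity (Cadd (Cmul A (Csub (Cexpi t) (1, 0))) (Cmul E (Csub (Cexpi t) (1, 0))));
      [Cpx_ring | rewrite IH; Cpx_ring].
Qed.

Definition root_unity_sum (N : nat) (a : Z) : Cpx :=
  Csum (map (fun s => Cexpi (IZR a * (2 * PI * INR s / INR N))) (seq 0 N)).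

Lemma root_unity_sum_eq N a : (Z.abs a < Z.of_nat N)%Z ->
  root_unity_sum N a = if Z.eq_dec a 0 then (INR N, 0) else (0, 0).
Proof.
  intro HN. unfold root_unity_sum. assert (HN0 : 0 < INR N) by (apply lt_0_INR; lia).
  destruct (Z.eq_dec a 0) as [-> | Ha].
  - rewrite (Csum_ext _ (fun _ => (1, 0))) by (intros; rewrite Rmult_0_l; apply Cexpi_0).
    rewrite (Csum_real (fun _ => 1)), Rsum_const, length_seq, Rmult_1_r. reflexivity.
  - set (t := IZR a * (2 * PI) / INR N).
    rewrite (Csum_ext _ (fun s => Cexpi (INR s * t))) by (intros; f_equal; unfold t; field; lra).
    pose proof (Cexpi_geometric_sum t N) as G.
    replace (INR N * t) with (0 + 2 * PI * IZR a) in G by (unfold t; field; lra).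
    rewrite Cexpi_period, Cexpi_0, Csub_diag in G.
    assert (Hne : Csub (Cexpi t) (1, 0) <> (0, 0)).
    { intro Hc. apply (Cexpi_neq_1 t).
      - pose proof PI_RGT_0.
        assert (0 < Rabs (IZR a) < INR N).
        { rewrite <- abs_IZR, INR_IZR_INZ. split; apply IZR_lt; lia. }
        unfold t, Rdiv. rewrite Rabs_mult, Rabs_inv, (Rabs_right (INR N)) by lra.
        rewrite Rabs_mult, (Rabs_right (2 * PI)) by lra.
        split; [apply Rdiv_lt_0_compat; nra|]. apply Rcomplements.Rlt_div_l; nra.
      - injection Hc as H1 H2. apply injective_projections; simpl; lra. }
    apply Cmod_eq_0. apply (f_equal Cmod) in G. rewrite Cmod_mult, Cmod_0 in G.
    apply Rmult_integral in G. destruct G as [G | G]; [exact G|].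
    exfalso. apply Hne, Cmod_eq_0, G.
Qed.

Lemma zapp_map {A B C : Type} (F : A -> B -> C) a j :
  zapp (map F a) j = map (fun p => F (fst p) (snd p)) (combine a j).
Proof.
  revert j; induction a as [|x a IH]; intros [|s j]; simpl; try reflexivity.
  unfold zapp in *. simpl. f_equal. apply IH.
Qed.

Lemma Cexpi_dot_map (a : list Z) (j : list nat) (g : nat -> R) :
  Cexpi (dot a (map g j)) = Cprod (map (fun p => Cexpi (IZR (fst p) * g (snd p))) (combine a j)).
Proof.
  revert j; induction a as [|z a IH]; intros [|s j]; unfold dot; simpl; try apply Cexpi_0.
  rewrite Cexpi_add. f_equal. apply IH.
Qed.

Definition allzero (a : list Z) : bool := forallb (fun z => Z.eqb z 0) a.

Lemma Csum_grid_Cexpi_dot d N a : length a = d -> (forall z, In z a -> (Z.abs z < Z.of_nat N)%Z) ->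
  Csum (map (fun j => Cexpi (dot a (grid N j))) (lbox d (seq 0 N))) =
  if allzero a then (INR N ^ d, 0) else (0, 0).
Proof.
  intros Hl Hz.
  set (fs := map (fun ai s => Cexpi (IZR ai * (2 * PI * INR s / INR N))) a).
  rewrite (Csum_ext _ (fun j => Cprod (zapp fs j)))
    by (intros j _; unfold grid, fs; rewrite Cexpi_dot_map, zapp_map; reflexivity).
  replace d with (length fs) by (unfold fs; rewrite length_map; exact Hl).
  rewrite Csum_lbox_prod. unfold fs. rewrite map_map, length_map. fold (root_unity_sum N).
  clear fs Hl. induction a as [|z a IH]; simpl; [reflexivity|].
  rewrite root_unity_sum_eq, IH by (intros; apply Hz; simpl; auto).
  destruct (Z.eq_dec z 0) as [-> | Hz0]; simpl.
  - destruct (allzero a); Cpx_ring.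
  - apply Z.eqb_neq in Hz0. rewrite Hz0. simpl. Cpx_ring.
Qed.

Definition zsub (m k : list Z) : list Z := map (fun p => (fst p - snd p)%Z) (combine m k).

Lemma dot_zsub m k y : length m = length k -> length k = length y ->
  dot (zsub m k) y = dot m y - dot k y.
Proof.
  revert k y; induction m as [|a m IH]; intros [|b k] [|c y] H1 H2; simpl in *; try lia;
    unfold dot, zsub in *; simpl; try ring.
  rewrite IH by lia. rewrite minus_IZR. ring.
Qed.

Lemma allzero_zsub m k : length m = length k -> allzero (zsub m k) = true <-> m = k.
Proof.
  revert k; induction m as [|a m IH]; intros [|b k] H; simpl in *; try lia;
    unfold allzero, zsub in *; simpl; [tauto|].
  rewrite Bool.andb_true_iff, IH, Z.eqb_eq by lia. split.
  - intros [H1 ->]. f_equal. lia.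
  - intro E. injection E as -> ->. split; [lia | reflexivity].
Qed.

Lemma riemann_coef_Cexpi d N m k : length m = d -> length k = d -> (1 <= N)%nat ->
  (forall p, In p (combine m k) -> (Z.abs (fst p - snd p) < Z.of_nat N)%Z) ->
  riemann_coef d N (fun x => Cexpi (dot m x)) k =
  if list_eq_dec Z.eq_dec m k then (1, 0) else (0, 0).
Proof.
  intros Hm Hk HN Hp. unfold riemann_coef.
  rewrite (Csum_ext _ (fun j => Cexpi (dot (zsub m k) (grid N j)))).
  2:{ intros j Hj. apply In_lbox_length in Hj.
      rewrite dot_zsub by (rewrite ?grid_length; lia). rewrite <- Cexpi_add. f_equal; ring. }
  rewrite Csum_grid_Cexpi_dot.
  - assert (HNd : 0 < INR N ^ d) by (apply pow_lt, lt_0_INR; lia).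
    destruct (list_eq_dec Z.eq_dec m k) as [<- | Hne].
    + replace (allzero (zsub m m)) with true by (symmetry; apply allzero_zsub; reflexivity).
      unfold Cscale; simpl. f_equal; field; lra.
    + destruct (allzero (zsub m k)) eqn:Ez; [apply allzero_zsub in Ez; [contradiction | lia]|].
      Cpx_ring.
  - unfold zsub. rewrite length_map, length_combine. lia.
  - intros z Hz. unfold zsub in Hz. apply in_map_iff in Hz. destruct Hz as [p [<- Hp']]. auto.
Qed.

Definition trig_degree (P : trigpoly) : nat :=
  fold_right (fun mc acc => Nat.max (zmax (fst mc)) acc) 0%nat P.

Lemma trig_degree_spec mc P : In mc P -> (zmax (fst mc) <= trig_degree P)%nat.
Proof.
  induction P as [|a P IH]; simpl; [intros []|].
  intros [-> | H]; [lia|]. specialize (IH H). lia.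
Qed.

Lemma riemann_coef_trig_eval d N P k :
  trig_dim d P -> length k = d -> (trig_degree P + zmax k < N)%nat ->
  riemann_coef d N (trig_eval P) k =
  Csum (map (fun mc => if list_eq_dec Z.eq_dec (fst mc) k then snd mc else (0, 0)) P).
Proof.
  intros HP Hk HN.
  transitivity (Csum (map (fun mc => Cmul (snd mc) (riemann_coef d N (fun x => Cexpi (dot (fst mc) x)) k)) P)).
  - unfold riemann_coef, trig_eval.
    rewrite (Csum_ext _ (fun j => Csum (map (fun mc => Cmul (snd mc)
        (Cmul (Cexpi (dot (fst mc) (grid N j))) (Cexpi (- dot k (grid N j))))) P))).
    2:{ intros j _. rewrite <- Csum_map_mul_r. apply Csum_ext. intros; Cpx_ring. }
    rewrite Csum_map_swap, <- Csum_map_Cscale_r. apply Csum_ext. intros mc _.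
    rewrite Csum_map_mul_l. Cpx_ring.
  - apply Csum_ext. intros [m c] Hmc. cbn [fst snd].
    rewrite riemann_coef_Cexpi; [| apply (HP _ Hmc) | exact Hk | lia |].
    + destruct (list_eq_dec Z.eq_dec m k); Cpx_ring.
    + intros [p1 p2] Hp. cbn [fst snd].
      pose proof (zmax_spec _ _ (in_combine_l _ _ _ _ Hp)).
      pose proof (zmax_spec _ _ (in_combine_r _ _ _ _ Hp)).
      pose proof (trig_degree_spec _ P Hmc). simpl in *. lia.
Qed.

(** * The dyadic decomposition *)

Lemma INR_le_pow2 n : INR n <= 2 ^ n.
Proof.
  induction n as [|n IH]; [simpl; lra|].
  rewrite S_INR. simpl. pose proof (pow_R1_Rle 2 n ltac:(lra)). lra.
Qed.

Lemma Rabs_div_pow2_le_1 xi L : Rabs xi <= 2 ^ L -> -1 <= xi / 2 ^ L <= 1.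
Proof.
  intro H. pose proof (pow_lt 2 L ltac:(lra)).
  assert (Habs : Rabs (xi / 2 ^ L) <= 1).
  { unfold Rdiv. rewrite Rabs_mult, Rabs_inv, (Rabs_right (2 ^ L)) by lra.
    apply Rcomplements.Rle_div_l; lra. }
  revert Habs. unfold Rabs. destruct Rcase_abs; lra.
Qed.

Section Admissible.

Variable psi : R -> R.
Hypothesis Hpsi : admissible psi.

Lemma psi_nonneg xi : 0 <= psi xi.
Proof. apply Hpsi. Qed.

Lemma psi_le_psi_div_pow2 n xi : psi xi <= psi (xi / 2 ^ n).
Proof.
  destruct Hpsi as (_ & _ & _ & Hm & _). induction n as [|n IH].
  - simpl. rewrite Rdiv_1_r. lra.
  - specialize (Hm (xi / 2 ^ n)).
    replace (xi / 2 ^ n / 2) with (xi / 2 ^ S n) in Hm by (simpl; field; apply pow_nonzero; lra).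
    lra.
Qed.

Lemma psi_div_pow2_eq_1 xi L : Rabs xi <= 2 ^ L -> psi (xi / 2 ^ L) = 1.
Proof. intro H. apply Hpsi, Rabs_div_pow2_le_1, H. Qed.

Lemma psi_le_1 xi : psi xi <= 1.
Proof.
  destruct (archimed (Rabs xi)) as [Hup _].
  pose proof (INR_le_pow2 (Z.to_nat (up (Rabs xi)))).
  rewrite INR_IZR_INZ, Z2Nat.id in H by (apply le_0_IZR; pose proof (Rabs_pos xi); lra).
  rewrite <- (psi_div_pow2_eq_1 xi (Z.to_nat (up (Rabs xi)))) by lra.
  apply psi_le_psi_div_pow2.
Qed.

Lemma phi_nonneg j xi : 0 <= phi psi j xi.
Proof.
  destruct j as [|j]; simpl; [apply psi_nonneg|].
  destruct Hpsi as (_ & _ & _ & Hm & _). specialize (Hm (xi / 2 ^ j)).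
  replace (xi / 2 ^ j / 2) with (xi / (2 * 2 ^ j)) in Hm by (field; apply pow_nonzero; lra).
  lra.
Qed.

Lemma Rsum_phi L xi : Rsum (map (fun s => phi psi s xi) (seq 0 (S L))) = psi (xi / 2 ^ L).
Proof.
  induction L as [|L IH]; [simpl; rewrite Rdiv_1_r; ring|].
  rewrite seq_S, map_app, Rsum_app, IH. simpl. ring.
Qed.

Lemma phi_eq_0 j xi : 2 ^ S (S j) < Rabs xi -> phi psi j xi = 0.
Proof.
  intro H. destruct Hpsi as (_ & Hsupp & _).
  assert (Hd : forall n, (n <= S j)%nat -> 3 / 2 < Rabs (xi / 2 ^ n)).
  { intros n Hn. pose proof (pow_lt 2 n ltac:(lra)). pose proof (pow_lt 2 j ltac:(lra)).
    assert (2 ^ n <= 2 ^ S j) by (apply Rle_pow; [lra | exact Hn]).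
    replace (Rabs (xi / 2 ^ n)) with (Rabs xi / 2 ^ n)
      by (unfold Rdiv; rewrite Rabs_mult, Rabs_inv, (Rabs_right (2 ^ n)) by lra; reflexivity).
    apply (Rcomplements.Rlt_div_r (3 / 2)); [lra|]. simpl in *. lra. }
  destruct j as [|j]; simpl.
  - apply Hsupp. specialize (Hd 0%nat ltac:(lia)). simpl in Hd. rewrite Rdiv_1_r in Hd. exact Hd.
  - rewrite (Hsupp (xi / (2 * 2 ^ j))), (Hsupp (xi / 2 ^ j)); [ring | |].
    + apply (Hd j); lia.
    + apply (Hd (S j)); lia.
Qed.

Lemma phiprod_nonneg l k : 0 <= phiprod psi l k.
Proof.
  apply Rprod_nonneg. intros x Hx. apply in_map_iff in Hx.
  destruct Hx as [p [<- _]]. apply phi_nonneg.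
Qed.

Lemma phiprod_eq_0 l k L : length l = length k -> (forall s, In s l -> (s <= L)%nat) ->
  (exists z, In z k /\ (Z.abs z <=? Z.of_nat (2 ^ S (S L)))%Z = false) -> phiprod psi l k = 0.
Proof.
  intros Hl HL [z [Hz Hb]]. apply Z.leb_gt in Hb.
  destruct (In_nth k z 0%Z Hz) as [i [Hi <-]].
  apply Rprod_eq_0, in_map_iff. exists (nth i l 0%nat, nth i k 0%Z). split.
  - cbn [fst snd]. apply phi_eq_0.
    assert (2 ^ S (S (nth i l 0%nat)) <= 2 ^ S (S L))
      by (apply Rle_pow; [lra | specialize (HL _ (nth_In l 0%nat (n := i) ltac:(lia))); lia]).
    rewrite <- abs_IZR. apply Rle_lt_trans with (2 ^ S (S L)); [assumption|].
    rewrite <- (pow_INR 2), INR_IZR_INZ. apply IZR_lt. simpl (INR 2). lia.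
  - rewrite <- combine_nth by exact Hl. apply nth_In. rewrite length_combine. lia.
Qed.

Lemma Rsum_phiprod d k L : length k = d ->
  Rsum (map (fun l => phiprod psi l k) (lbox d (seq 0 (S L)))) =
  Rprod (map (fun z => psi (IZR z / 2 ^ L)) k).
Proof.
  intro Hk. set (fs := map (fun z s => phi psi s (IZR z)) k).
  rewrite (Rsum_ext _ (fun l => Rprod (zapp fs l))).
  2:{ intros l _. unfold fs, phiprod. rewrite zapp_map. unfold Rprod. f_equal.
      apply (map_combine_swap (fun a b => phi psi a (IZR b))). }
  replace d with (length fs) by (unfold fs; rewrite length_map; exact Hk).
  rewrite Rsum_lbox_prod. unfold fs. rewrite map_map. f_equal. apply map_ext. intro z. apply Rsum_phi.
Qed.

Lemma Rprod_psi_unit_interval k L : 0 <= Rprod (map (fun z => psi (IZR z / 2 ^ L)) k) <= 1.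
Proof.
  assert (H : forall x, In x (map (fun z => psi (IZR z / 2 ^ L)) k) -> 0 <= x <= 1).
  { intros x Hx. apply in_map_iff in Hx. destruct Hx as [z [<- _]].
    split; [apply psi_nonneg | apply psi_le_1]. }
  split; [apply Rprod_nonneg; intros; apply H | apply Rprod_le_1]; assumption.
Qed.

End Admissible.

(** * The embedding of the Wiener algebra *)

Lemma supnorm_ub d F x : bounded_fun d F -> length x = d -> Cmod (F x) <= supnorm d F.
Proof. intros Hb Hx. apply Rsup_ub; [exact Hb | exists x; auto]. Qed.

Lemma supnorm_le d F b : (forall x, length x = d -> Cmod (F x) <= b) -> supnorm d F <= b.
Proof.
  intro H. apply Rsup_le.
  - exists (Cmod (F (repeat 0 d))), (repeat 0 d). rewrite repeat_length. auto.
  - intros r [x [Hx ->]]. auto.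
Qed.

Lemma supnorm_nonneg d F : bounded_fun d F -> 0 <= supnorm d F.
Proof.
  intro Hb. eapply Rle_trans; [apply (Cmod_ge_0 (F (repeat 0 d)))|].
  apply supnorm_ub; [exact Hb | apply repeat_length].
Qed.

Lemma In_lbox_seq d L l :
  In l (lbox d (seq 0 (S L))) -> length l = d /\ forall s, In s l -> (s <= L)%nat.
Proof.
  intro H. apply In_lbox in H. destruct H as [Hl H]. split; [exact Hl|].
  intros s Hs. apply H, in_seq in Hs. lia.
Qed.

Section Blocks.

Variables (psi : R -> R) (d : nat) (g : list Z -> Cpx).
Hypothesis Hpsi : admissible psi.

Definition block_partial (l : list nat) (Q : nat) (x : list R) : Cpx :=
  Csum (map (fun k => Cscale (phiprod psi l k) (Cmul (g k) (Cexpi (dot k x)))) (zbox d Q)).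

Definition block_radius (L : nat) : nat := (2 ^ S (S L))%nat.

Lemma block_eq_partial l L x : length l = d -> (forall s, In s l -> (s <= L)%nat) ->
  block psi d g l x = block_partial l (block_radius L) x.
Proof.
  intros Hl HL. apply Clim_eq, Ccv_eventually_const. exists (block_radius L). intros Q HQ.
  unfold block_partial, zbox.
  rewrite (Csum_lbox_filter d (zrange Q) (fun z => Z.abs z <=? Z.of_nat (block_radius L))%Z).
  - rewrite filter_zrange by exact HQ. reflexivity.
  - intros k Hk Hz. rewrite (phiprod_eq_0 psi Hpsi l k L) by (try lia; assumption).
    Cpx_ring.
Qed.

Definition block_weight (l : list nat) (Q : nat) : R :=
  Rsum (map (fun k => phiprod psi l k * Cmod (g k)) (zbox d Q)).

Lemma Cmod_block_partial_le l Q x : Cmod (block_partial l Q x) <= block_weight l Q.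
Proof.
  eapply Rle_trans; [apply Cmod_Csum_le | apply Rsum_le]. intros k _.
  rewrite Cmod_Cscale, Cmod_mult, Cmod_Cexpi, Rmult_1_r, Rabs_right;
    [lra | apply Rle_ge, phiprod_nonneg, Hpsi].
Qed.

Lemma block_bounded l : length l = d -> bounded_fun d (block psi d g l).
Proof.
  intros Hl. exists (block_weight l (block_radius (list_max l))). intros r [x [Hx ->]].
  rewrite (block_eq_partial l (list_max l)) by (try assumption; apply Forall_forall, list_max_le; reflexivity).
  apply Cmod_block_partial_le.
Qed.

(* Summing the blocks with [l_j <= N] gives the weights [prod_j psi(k_j / 2^N) <= 1]. *)
Lemma S_partial_le_A_partial N : S_partial psi d g N <= A_partial d g (block_radius N).
Proof.
  unfold S_partial, A_partial.
  eapply Rle_trans.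
  { apply (Rsum_le _ (fun l => block_weight l (block_radius N))).
    intros l Hl. apply In_lbox_seq in Hl. destruct Hl as [Hl HL]. apply supnorm_le. intros x Hx.
    rewrite (block_eq_partial l N) by assumption. apply Cmod_block_partial_le. }
  unfold block_weight. rewrite Rsum_map_swap. apply Rsum_le. intros k Hk.
  rewrite (Rsum_ext _ (fun l => Cmod (g k) * phiprod psi l k)) by (intros; ring).
  rewrite Rsum_map_mult_l, Rsum_phiprod by (try exact Hpsi; eapply In_zbox_length; eauto).
  pose proof (Rprod_psi_unit_interval psi Hpsi k N). pose proof (Cmod_ge_0 (g k)). nra.
Qed.

End Blocks.

Lemma A_partial_le_normA d g N : in_A d g -> A_partial d g N <= normA d g.
Proof. intro H. apply Rsup_ub; [exact H | exists N; reflexivity]. Qed.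

Theorem wiener_embedding psi d g : admissible psi -> in_A d g ->
  in_S psi d g /\ normS psi d g <= normA d g.
Proof.
  intros Hpsi HA.
  assert (HS : forall N, S_partial psi d g N <= normA d g).
  { intro N. eapply Rle_trans; [apply S_partial_le_A_partial, Hpsi | apply A_partial_le_normA, HA]. }
  split; [split; [|split]|].
  - exists (normA d g), 0%nat. intros k Hk. simpl. rewrite Rmult_1_r.
    eapply Rle_trans; [|apply (A_partial_le_normA d g (zmax k) HA)].
    apply (Rsum_In_le (fun k => Cmod (g k))); [intros; apply Cmod_ge_0 | apply In_zbox_zmax, Hk].
  - intros l Hl. apply block_bounded; assumption.
  - exists (normA d g). intros r [N ->]. apply HS.
  - apply Rsup_le; [exists (S_partial psi d g 0), 0%nat; reflexivity|]. intros r [N ->]. apply HS.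
Qed.

(** * The embedding into continuous functions *)

Section DyadicSum.

Variables (psi : R -> R) (d : nat) (g : list Z -> Cpx).
Hypothesis Hpsi : admissible psi.
Hypothesis HS : in_S psi d g.

Definition dyadic_partial (L : nat) (x : list R) : Cpx :=
  Csum (map (fun l => block psi d g l x) (lbox d (seq 0 (S L)))).

Lemma S_partial_split L L' : (L <= L')%nat ->
  S_partial psi d g L' = S_partial psi d g L +
    Rsum (map (fun l => if forallb (fun s => s <=? L)%nat l then 0 else supnorm d (block psi d g l))
              (lbox d (seq 0 (S L')))).
Proof.
  intro H. unfold S_partial.
  rewrite (Rsum_lbox_split d _ (fun s => s <=? L)%nat), filter_seq_le; auto.
Qed.

Lemma dyadic_partial_split L L' x : (L <= L')%nat ->
  dyadic_partial L' x = Cadd (dyadic_partial L x)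
    (Csum (map (fun l => if forallb (fun s => s <=? L)%nat l then (0, 0) else block psi d g l x)
               (lbox d (seq 0 (S L'))))).
Proof.
  intro H. unfold dyadic_partial.
  rewrite (Csum_lbox_split d _ (fun s => s <=? L)%nat), filter_seq_le; auto.
Qed.

Lemma S_partial_mono L L' : (L <= L')%nat -> S_partial psi d g L <= S_partial psi d g L'.
Proof.
  intro H. rewrite (S_partial_split L L' H).
  enough (0 <= Rsum (map (fun l => if forallb (fun s => s <=? L)%nat l then 0
                                  else supnorm d (block psi d g l)) (lbox d (seq 0 (S L'))))) by lra.
  apply Rsum_nonneg. intros l Hl. destruct forallb; [lra|].
  apply supnorm_nonneg, (proj1 (proj2 HS)), (In_lbox_length _ _ _ Hl).
Qed.

Lemma Cmod_dyadic_partial_sub_le L L' x : (L <= L')%nat -> length x = d ->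
  Cmod (Csub (dyadic_partial L' x) (dyadic_partial L x)) <= S_partial psi d g L' - S_partial psi d g L.
Proof.
  intros H Hx. rewrite (dyadic_partial_split L L' x H), (S_partial_split L L' H).
  set (r := Csum _). set (s := Rsum _).
  replace (Csub (Cadd (dyadic_partial L x) r) (dyadic_partial L x)) with r by Cpx_ring.
  replace (S_partial psi d g L + s - S_partial psi d g L) with s by ring.
  eapply Rle_trans; [apply Cmod_Csum_le | apply Rsum_le]. intros l Hl. destruct forallb.
  - rewrite Cmod_0; lra.
  - apply supnorm_ub; [apply (proj1 (proj2 HS)), (In_lbox_length _ _ _ Hl) | exact Hx].
Qed.

Lemma Cmod_dyadic_partial_le L x : length x = d -> Cmod (dyadic_partial L x) <= S_partial psi d g L.
Proof.
  intro Hx. eapply Rle_trans; [apply Cmod_Csum_le | apply Rsum_le]. intros l Hl.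
  apply supnorm_ub; [apply (proj1 (proj2 HS)), (In_lbox_length _ _ _ Hl) | exact Hx].
Qed.

Lemma S_partial_le_normS L : S_partial psi d g L <= normS psi d g.
Proof. apply Rsup_ub; [apply HS | exists L; reflexivity]. Qed.

Lemma normS_sub_S_partial_small eps : 0 < eps ->
  exists L0, forall L, (L >= L0)%nat -> normS psi d g - S_partial psi d g L < eps.
Proof.
  intro He.
  destruct (Rsup_approx _ eps (proj2 (proj2 HS)) (ex_intro _ _ (ex_intro _ 0%nat eq_refl)) He)
    as [r [[L0 ->] Hr]].
  exists L0. intros L HL. pose proof (S_partial_mono L0 L HL). unfold normS. lra.
Qed.

Definition dyadic_sum (x : list R) : Cpx := Clim (fun L => dyadic_partial L x).

Lemma dyadic_partial_cv x : length x = d -> Ccv (fun L => dyadic_partial L x) (dyadic_sum x).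
Proof.
  intro Hx. destruct (Ccv_Cauchy (fun L => dyadic_partial L x)) as [F HF].
  - intros e He. destruct (normS_sub_S_partial_small e He) as [L0 HL0]. exists L0. intros n m Hn Hm.
    destruct (le_lt_dec n m).
    + rewrite Cmod_Csub_sym. eapply Rle_lt_trans; [apply Cmod_dyadic_partial_sub_le; assumption|].
      pose proof (S_partial_le_normS m). specialize (HL0 n Hn). lra.
    + eapply Rle_lt_trans; [apply Cmod_dyadic_partial_sub_le; [lia | assumption]|].
      pose proof (S_partial_le_normS n). specialize (HL0 m Hm). lra.
  - unfold dyadic_sum. rewrite (Clim_eq _ _ HF). exact HF.
Qed.

Lemma Cmod_dyadic_sum_sub_le L x : length x = d ->
  Cmod (Csub (dyadic_partial L x) (dyadic_sum x)) <= normS psi d g - S_partial psi d g L.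
Proof.
  intro Hx. apply (Ccv_Cmod_Csub_le _ _ _ _ (dyadic_partial_cv x Hx)). exists L. intros n Hn.
  rewrite Cmod_Csub_sym. eapply Rle_trans; [apply Cmod_dyadic_partial_sub_le; assumption|].
  pose proof (S_partial_le_normS n). lra.
Qed.

Lemma Cmod_dyadic_sum_le x : length x = d -> Cmod (dyadic_sum x) <= normS psi d g.
Proof.
  intro Hx. rewrite <- Cmod_Csub_0_l.
  apply (Ccv_Cmod_Csub_le _ _ _ _ (dyadic_partial_cv x Hx)). exists 0%nat. intros n _.
  rewrite Cmod_Csub_0_l.
  eapply Rle_trans; [apply Cmod_dyadic_partial_le, Hx | apply S_partial_le_normS].
Qed.

(* The blocks with [l_j <= L] telescope to the multiplier [prod_j psi (k_j / 2^L)]. *)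
Definition dyadic_trigpoly (L : nat) : trigpoly :=
  map (fun k => (k, Cscale (Rprod (map (fun z => psi (IZR z / 2 ^ L)) k)) (g k)))
      (zbox d (block_radius L)).

Lemma dyadic_trigpoly_dim L : trig_dim d (dyadic_trigpoly L).
Proof.
  intros mc Hmc. apply in_map_iff in Hmc. destruct Hmc as [k [<- Hk]].
  exact (In_zbox_length _ _ _ Hk).
Qed.

Lemma dyadic_partial_eq L x : dyadic_partial L x = trig_eval (dyadic_trigpoly L) x.
Proof.
  unfold dyadic_partial.
  rewrite (Csum_ext _ (fun l => block_partial psi d g l (block_radius L) x)).
  2:{ intros l Hl. apply In_lbox_seq in Hl. destruct Hl. apply block_eq_partial; assumption. }
  unfold block_partial. rewrite Csum_map_swap. unfold trig_eval, dyadic_trigpoly.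
  rewrite map_map. apply Csum_ext. intros k Hk. cbn [fst snd].
  rewrite (Csum_map_Cscale_l (fun l => phiprod psi l k)), Rsum_phiprod
    by (try exact Hpsi; eapply In_zbox_length; eauto).
  Cpx_ring.
Qed.

Lemma dyadic_sum_continuous x : length x = d -> forall eps, 0 < eps -> exists delta, 0 < delta /\
  forall y, length y = d -> (forall j, (j < d)%nat -> Rabs (nth j y 0 - nth j x 0) < delta) ->
  Cmod (Csub (dyadic_sum y) (dyadic_sum x)) < eps.
Proof.
  intros Hx e He.
  destruct (normS_sub_S_partial_small (e / 3) ltac:(lra)) as [L HL]. specialize (HL L (le_n _)).
  pose proof (trig_lipschitz_nonneg (dyadic_trigpoly L)) as HC.
  set (C := trig_lipschitz (dyadic_trigpoly L)) in *.
  exists (e / (3 * (C + 1))). split; [apply Rdiv_lt_0_compat; lra|].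
  intros y Hy Hd.
  pose proof (trig_eval_lipschitz d (dyadic_trigpoly L) x y (e / (3 * (C + 1)))
    (dyadic_trigpoly_dim L) Hx Hy ltac:(intros; left; auto)) as Hlip.
  rewrite <- !dyadic_partial_eq in Hlip. fold C in Hlip.
  assert (HCe : C * (e / (3 * (C + 1))) <= e / 3).
  { replace (C * (e / (3 * (C + 1)))) with (e / 3 * (C / (C + 1))) by (field; lra).
    assert (C / (C + 1) <= 1) by (apply Rcomplements.Rle_div_l; lra). nra. }
  pose proof (Cmod_dyadic_sum_sub_le L x Hx) as Hx'.
  pose proof (Cmod_dyadic_sum_sub_le L y Hy) as Hy'. rewrite Cmod_Csub_sym in Hy'.
  pose proof (Cmod_Csub_triangle (dyadic_sum y) (dyadic_partial L y) (dyadic_sum x)).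
  pose proof (Cmod_Csub_triangle (dyadic_partial L y) (dyadic_partial L x) (dyadic_sum x)).
  lra.
Qed.

Lemma dyadic_sum_shift2pi x j : length x = d -> (j < d)%nat ->
  dyadic_sum (shift2pi x j) = dyadic_sum x.
Proof.
  intros Hx Hj. unfold dyadic_sum. f_equal. apply functional_extensionality. intro L.
  rewrite !dyadic_partial_eq. apply (trig_eval_shift2pi d); [apply dyadic_trigpoly_dim | assumption..].
Qed.

(* For [L] large the Riemann sums of the partial sum reproduce [g k] exactly, while the
   partial sum is uniformly close to the limit. *)
Lemma riemann_coef_dyadic_sum_cv k : length k = d ->
  Ccv (fun N => riemann_coef d N dyadic_sum k) (g k).
Proof.
  intros Hk e He.
  destruct (normS_sub_S_partial_small (e / 2) ltac:(lra)) as [L0 HL0].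
  set (L := Nat.max L0 (zmax k)). specialize (HL0 L ltac:(lia)).
  exists (S (trig_degree (dyadic_trigpoly L) + zmax k)). intros N HN.
  assert (E : riemann_coef d N (dyadic_partial L) k = g k).
  { replace (dyadic_partial L) with (trig_eval (dyadic_trigpoly L))
      by (apply functional_extensionality; intro; symmetry; apply dyadic_partial_eq).
    rewrite (riemann_coef_trig_eval d) by (try apply dyadic_trigpoly_dim; try assumption; lia).
    unfold dyadic_trigpoly. rewrite map_map. cbn [fst snd].
    rewrite (Csum_delta (list_eq_dec Z.eq_dec)
      (fun m => Cscale (Rprod (map (fun z => psi (IZR z / 2 ^ L)) m)) (g m))).
    - rewrite Rprod_eq_1; [Cpx_ring|].
      intros r Hr. apply in_map_iff in Hr. destruct Hr as [z [<- Hz]]. apply (psi_div_pow2_eq_1 psi Hpsi).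
      pose proof (zmax_spec z k Hz). rewrite <- abs_IZR.
      eapply Rle_trans; [|apply INR_le_pow2]. rewrite INR_IZR_INZ. apply IZR_le. lia.
    - apply NoDup_zbox.
    - apply In_lbox. split; [exact Hk|]. intros z Hz. apply In_zrange.
      pose proof (zmax_spec z k Hz). unfold block_radius.
      assert (S (S L) < 2 ^ S (S L))%nat by (apply Nat.pow_gt_lin_r; lia). lia. }
  rewrite <- E, Cmod_Csub_sym.
  apply Rle_lt_trans with (normS psi d g - S_partial psi d g L); [|lra].
  apply riemann_coef_sub_le; [lia|]. intros j Hj. apply Cmod_dyadic_sum_sub_le, (grid_in_cube d N j Hj).
Qed.

End DyadicSum.

Theorem besov_embedding psi d g : admissible psi -> in_S psi d g ->
  contT d (dyadic_sum psi d g) /\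
  (forall k, length k = d -> fcoef d (dyadic_sum psi d g) k = g k) /\
  supnorm d (dyadic_sum psi d g) <= normS psi d g.
Proof.
  intros Hpsi HS. split; [split|split].
  - apply dyadic_sum_continuous; assumption.
  - intros. apply dyadic_sum_shift2pi; assumption.
  - intros k Hk. apply Clim_eq, riemann_coef_dyadic_sum_cv; assumption.
  - apply supnorm_le. intros. apply Cmod_dyadic_sum_le; assumption.
Qed.

Lemma nth_map_seq {A : Type} (F : nat -> A) (x0 : A) d i :
  (i < d)%nat -> nth i (map F (seq 0 d)) x0 = F i.
Proof.
  intro H. rewrite (nth_indep _ x0 (F 0%nat)) by (rewrite length_map, length_seq; exact H).
  rewrite map_nth, seq_nth; [reflexivity | exact H].
Qed.

Lemma upd_nth_same x j : (j < length x)%nat -> upd x j (nth j x 0) = x.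
Proof.
  intro H. apply nth_ext with 0 0; [rewrite length_upd; auto|].
  intros i Hi. rewrite length_upd in Hi by exact H. rewrite nth_upd by exact H.
  destruct (Nat.eqb_spec i j); subst; reflexivity.
Qed.

Lemma upd_upd x j v w : (j < length x)%nat -> upd (upd x j v) j w = upd x j w.
Proof.
  intro H. apply nth_ext with 0 0; [rewrite !length_upd; try rewrite length_upd; auto|].
  intros i Hi. rewrite !length_upd in Hi by (try rewrite length_upd; auto).
  rewrite !nth_upd; try rewrite length_upd; auto. destruct (Nat.eqb i j); reflexivity.
Qed.

Lemma nth_upd_eq x j v : (j < length x)%nat -> nth j (upd x j v) 0 = v.
Proof. intro H. rewrite nth_upd, Nat.eqb_refl by exact H. reflexivity. Qed.

Section Periodic.

Variables (d : nat) (f : list R -> Cpx).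
Hypothesis Hf : contT d f.

Lemma contT_upd_period_nat x j m : length x = d -> (j < d)%nat ->
  f (upd x j (nth j x 0 + 2 * PI * INR m)) = f x.
Proof.
  intros Hx Hj. induction m as [|m IH].
  - simpl. rewrite Rmult_0_r, Rplus_0_r, upd_nth_same by lia. reflexivity.
  - rewrite <- IH. set (y := upd x j (nth j x 0 + 2 * PI * INR m)).
    assert (Hy : length y = d) by (unfold y; rewrite length_upd; lia).
    rewrite <- (proj2 Hf y j Hy Hj). unfold shift2pi. fold (upd y j (nth j y 0 + 2 * PI)).
    unfold y. rewrite nth_upd_eq, upd_upd, S_INR by lia. f_equal. f_equal. ring.
Qed.

Lemma contT_upd_period x j n : length x = d -> (j < d)%nat ->
  f (upd x j (nth j x 0 + 2 * PI * IZR n)) = f x.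
Proof.
  intros Hx Hj. destruct (Z_le_gt_dec 0 n).
  - rewrite <- (Z2Nat.id n), <- INR_IZR_INZ by lia. apply contT_upd_period_nat; assumption.
  - set (y := upd x j (nth j x 0 + 2 * PI * IZR n)).
    assert (Hy : length y = d) by (unfold y; rewrite length_upd; lia).
    rewrite <- (contT_upd_period_nat y j (Z.to_nat (- n)) Hy Hj). f_equal.
    unfold y. rewrite nth_upd_eq, upd_upd, INR_IZR_INZ, Z2Nat.id, opp_IZR by lia.
    replace (nth j x 0 + 2 * PI * IZR n + 2 * PI * - IZR n) with (nth j x 0) by ring.
    apply upd_nth_same. lia.
Qed.

Definition zshift (x : list R) (n : nat -> Z) : list R :=
  map (fun i => nth i x 0 + 2 * PI * IZR (n i)) (seq 0 d).

Lemma zshift_length x n : length (zshift x n) = d.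
Proof. unfold zshift. rewrite length_map, length_seq. reflexivity. Qed.

Lemma nth_zshift x n i : (i < d)%nat -> nth i (zshift x n) 0 = nth i x 0 + 2 * PI * IZR (n i).
Proof. intro H. apply (nth_map_seq (fun i => nth i x 0 + 2 * PI * IZR (n i))), H. Qed.

Lemma contT_zshift x n : length x = d -> f (zshift x n) = f x.
Proof.
  intro Hx.
  (* [y m] is [x] with its first [m] coordinates shifted by their periods. *)
  set (y := fun m => map (fun i => nth i x 0 + (if (i <? m)%nat then 2 * PI * IZR (n i) else 0)) (seq 0 d)).
  assert (Hyl : forall m, length (y m) = d) by (intro; unfold y; rewrite length_map, length_seq; auto).
  assert (Hyn : forall m i, (i < d)%nat ->
            nth i (y m) 0 = nth i x 0 + (if (i <? m)%nat then 2 * PI * IZR (n i) else 0))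
    by (intros m i Hi; apply (nth_map_seq (fun i => _)), Hi).
  assert (Hstep : forall m, (m < d)%nat -> f (y (S m)) = f (y m)).
  { intros m Hm. rewrite <- (contT_upd_period (y m) m (n m)) by auto. f_equal.
    apply nth_ext with 0 0; [rewrite length_upd, !Hyl; [reflexivity | rewrite Hyl; lia]|].
    intros i Hi. rewrite Hyl in Hi. rewrite nth_upd, !Hyn by (rewrite ?Hyl; lia).
    destruct (Nat.eqb_spec i m) as [-> |].
    - rewrite (proj2 (Nat.ltb_lt m (S m))), (proj2 (Nat.ltb_ge m m)) by lia. ring.
    - destruct (Nat.ltb_spec i (S m)); destruct (Nat.ltb_spec i m); try lia; reflexivity. }
  assert (Hall : forall m, (m <= d)%nat -> f (y m) = f (y 0%nat)).
  { induction m as [|m IH]; intros Hm; [reflexivity|]. rewrite Hstep by lia. apply IH; lia. }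
  replace (zshift x n) with (y d).
  2:{ apply nth_ext with 0 0; [rewrite Hyl, zshift_length; reflexivity|]. intros i Hi. rewrite Hyl in Hi.
      rewrite Hyn, nth_zshift, (proj2 (Nat.ltb_lt i d)) by exact Hi. reflexivity. }
  rewrite Hall by lia. f_equal.
  apply nth_ext with 0 0; [rewrite Hyl; auto|]. intros i Hi. rewrite Hyl in Hi. rewrite Hyn by exact Hi.
  simpl. ring.
Qed.

End Periodic.

Lemma zshift_in_cube d x : length x = d -> exists n, in_cube d (zshift d x n).
Proof.
  intro Hx. exists (fun i => Z.opp (Zfloor (nth i x 0 / (2 * PI)))). split; [apply zshift_length|].
  intros i Hi. rewrite nth_zshift, opp_IZR by exact Hi.
  pose proof (Zfloor_bound (nth i x 0 / (2 * PI))). pose proof PI_RGT_0.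
  set (r := nth i x 0) in *. set (fl := IZR (Zfloor (r / (2 * PI)))) in *.
  assert (E : r = (r / (2 * PI)) * (2 * PI)) by (field; lra).
  split; nra.
Qed.

(** * Compactness of the cube *)

Section CubeCompactness.

Variable d : nat.
Variable P : (list R -> Prop) -> Prop.
Hypothesis P_mono : forall A B : list R -> Prop, (forall x, A x -> B x) -> P B -> P A.
Hypothesis P_empty : P (fun _ => False).
Hypothesis P_union : forall A B, P A -> P B -> P (fun x => A x \/ B x).
Hypothesis P_local : forall z, length z = d -> exists delta, 0 < delta /\
  P (fun x => length x = d /\ forall i, (i < d)%nat -> Rabs (nth i x 0 - nth i z 0) < delta).

Definition in_box (a : nat -> R) (w : R) (x : list R) : Prop :=
  length x = d /\ forall i, (i < d)%nat -> a i <= nth i x 0 <= a i + w.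

(* The [2^d] subcubes of half the size are indexed by [b : list bool] of length [d]. *)
Definition subcube_corner (a : nat -> R) (w : R) (b : list bool) : nat -> R :=
  fun i => a i + (if nth i b false then w / 2 else 0).

Lemma P_finite_union (As : list (list R -> Prop)) :
  (forall A, In A As -> P A) -> P (fun x => exists A, In A As /\ A x).
Proof.
  induction As as [|A As IH]; intros H.
  - apply (P_mono _ _ (fun x (Hx : exists A, In A [] /\ A x) => let (_, HA) := Hx in proj1 HA)).
    exact P_empty.
  - apply (P_mono _ (fun x => A x \/ exists A', In A' As /\ A' x)).
    + intros x [A' [[<- | HA'] Hx]]; [left | right; exists A']; auto.
    + apply P_union; [apply H; left; reflexivity | apply IH; intros; apply H; right; assumption].
Qed.

Lemma in_box_subcube a w x : 0 <= w -> in_box a w x ->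
  exists b, In b (lbox d [false; true]) /\ in_box (subcube_corner a w b) (w / 2) x.
Proof.
  intros Hw [Hx Hb].
  exists (map (fun i => if Rle_dec (a i + w / 2) (nth i x 0) then true else false) (seq 0 d)).
  split.
  - apply In_lbox. rewrite length_map, length_seq. split; [reflexivity|].
    intros z _. destruct z; simpl; auto.
  - split; [exact Hx|]. intros i Hi. specialize (Hb i Hi). unfold subcube_corner.
    rewrite (nth_map_seq (fun i => if Rle_dec (a i + w / 2) (nth i x 0) then true else false))
      by exact Hi.
    destruct (Rle_dec (a i + w / 2) (nth i x 0)); lra.
Qed.

Lemma exists_bad_subcube a w : 0 <= w -> ~ P (in_box a w) ->
  exists b, ~ P (in_box (subcube_corner a w b) (w / 2)).
Proof.
  intros Hw Hbad. apply NNPP. intro Hall. apply Hbad.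
  apply (P_mono _ (fun x => exists A, In A (map (fun b => in_box (subcube_corner a w b) (w / 2))
                                                 (lbox d [false; true])) /\ A x)).
  - intros x Hx. destruct (in_box_subcube a w x Hw Hx) as [b [Hb Hxb]].
    exists (in_box (subcube_corner a w b) (w / 2)).
    split; [apply (in_map (fun b => in_box (subcube_corner a w b) (w / 2))), Hb | exact Hxb].
  - apply P_finite_union. intros A HA. apply in_map_iff in HA. destruct HA as [b [<- _]].
    apply NNPP. intro HbadA. apply Hall. exists b. exact HbadA.
Qed.

Definition next_box (aw : (nat -> R) * R) : (nat -> R) * R :=
  match excluded_middle_informative
          (exists b, ~ P (in_box (subcube_corner (fst aw) (snd aw) b) (snd aw / 2))) with
  | left H => (subcube_corner (fst aw) (snd aw) (proj1_sig (constructive_indefinite_description _ H)),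
               snd aw / 2)
  | right _ => (fst aw, snd aw / 2)
  end.

Definition box_seq (n : nat) : (nat -> R) * R := Nat.iter n next_box (fun _ => 0, 2 * PI).

Lemma box_seq_width n : snd (box_seq n) = 2 * PI / 2 ^ n.
Proof.
  induction n as [|n IH]; [simpl; field|].
  change (box_seq (S n)) with (next_box (box_seq n)). unfold next_box.
  destruct excluded_middle_informative; simpl; rewrite IH; field; apply pow_nonzero; lra.
Qed.

Lemma box_seq_width_nonneg n : 0 <= snd (box_seq n).
Proof.
  rewrite box_seq_width. pose proof PI_RGT_0. pose proof (pow_lt 2 n).
  apply Rcomplements.Rdiv_le_0_compat; lra.
Qed.

Lemma box_seq_nested n i :
  fst (box_seq n) i <= fst (box_seq (S n)) i /\
  fst (box_seq (S n)) i + snd (box_seq (S n)) <= fst (box_seq n) i + snd (box_seq n).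
Proof.
  pose proof (box_seq_width_nonneg n).
  change (box_seq (S n)) with (next_box (box_seq n)). unfold next_box.
  destruct excluded_middle_informative; simpl; [|lra].
  unfold subcube_corner. destruct nth; lra.
Qed.

Lemma box_seq_bad n : ~ P (in_box (fun _ => 0) (2 * PI)) -> ~ P (in_box (fst (box_seq n)) (snd (box_seq n))).
Proof.
  intro H0. induction n as [|n IH]; [exact H0|].
  change (box_seq (S n)) with (next_box (box_seq n)). unfold next_box.
  destruct excluded_middle_informative as [Hex | Hnot]; simpl.
  - destruct (constructive_indefinite_description _ Hex) as [b Hb]. exact Hb.
  - exfalso. apply Hnot, exists_bad_subcube; [apply box_seq_width_nonneg | exact IH].
Qed.

(* The nested boxes shrink to a point [z]; near [z] the property holds by locality. *)
Theorem cube_compactness : P (in_cube d).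
Proof.
  apply (P_mono _ (in_box (fun _ => 0) (2 * PI))).
  { intros x [Hx Hb]. split; [exact Hx|]. intros i Hi. specialize (Hb i Hi). lra. }
  apply NNPP. intro Hbad. pose proof PI_RGT_0.
  set (a := fun n i => fst (box_seq n) i). set (w := fun n => snd (box_seq n)).
  assert (Hw : Un_cv w 0).
  { unfold w. intros e He. destruct (cv_pow_half (2 * PI) e He) as [N HN]. exists N. intros n Hn.
    rewrite box_seq_width. unfold R_dist in *. rewrite Rminus_0_r in *.
    replace (2 * PI / 2 ^ n) with (2 * PI / 2 ^ n - 0) by ring. apply HN, Hn. }
  assert (Hgrow : forall i, Un_growing (fun n => a n i)) by (intros i n; apply box_seq_nested).
  assert (Hdecr : forall i, Un_decreasing (fun n => a n i + w n)) by (intros i n; apply box_seq_nested).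
  assert (Hwpos : forall n, 0 <= w n) by (intro; apply box_seq_width_nonneg).
  assert (Hub : forall i, has_ub (fun n => a n i)).
  { intro i. exists (a 0%nat i + w 0%nat). intros r [n ->].
    pose proof (decreasing_prop _ 0 n (Hdecr i) (Nat.le_0_l n)). pose proof (Hwpos n). lra. }
  set (zi := fun i => proj1_sig (growing_cv _ (Hgrow i) (Hub i))).
  assert (Hz : forall i, Un_cv (fun n => a n i) (zi i))
    by (intro i; unfold zi; destruct growing_cv; assumption).
  assert (Hzb : forall i n, a n i <= zi i <= a n i + w n).
  { intros i n. split; [apply (growing_ineq _ _ (Hgrow i) (Hz i))|].
    apply (decreasing_ineq (fun n => a n i + w n)); [apply Hdecr|].
    rewrite <- (Rplus_0_r (zi i)). apply CV_plus; [apply Hz | exact Hw]. }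
  set (z := map zi (seq 0 d)).
  assert (Hzl : length z = d) by (unfold z; rewrite length_map, length_seq; reflexivity).
  destruct (P_local z Hzl) as [delta [Hdelta Hnear]].
  destruct (Hw delta Hdelta) as [n Hn]. specialize (Hn n (le_n n)).
  unfold R_dist in Hn. rewrite Rminus_0_r, Rabs_right in Hn by (apply Rle_ge, Hwpos).
  apply (box_seq_bad n Hbad). revert Hnear. apply P_mono. intros x [Hx Hb]. split; [exact Hx|].
  intros i Hi. unfold z. rewrite (nth_map_seq zi) by exact Hi.
  specialize (Hb i Hi). specialize (Hzb i n). fold (a n i) (w n) in Hb.
  apply Rabs_def1; lra.
Qed.

End CubeCompactness.

Definition uniformly_close_on (d : nat) (f : list R -> Cpx) (eps : R) (A : list R -> Prop) : Prop :=
  exists delta, 0 < delta /\ forall x, A x -> forall y, length y = d ->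
    (forall i, (i < d)%nat -> Rabs (nth i y 0 - nth i x 0) < delta) -> Cmod (Csub (f y) (f x)) < eps.

Lemma contT_uniformly_close_on_cube d f eps : contT d f -> 0 < eps ->
  uniformly_close_on d f eps (in_cube d).
Proof.
  intros [Hc _] He. apply cube_compactness.
  - intros A B HAB [delta [Hd H]]. exists delta. split; [exact Hd|]. intros x Hx. apply H, HAB, Hx.
  - exists 1. split; [lra | intros x []].
  - intros A B [d1 [Hd1 H1]] [d2 [Hd2 H2]]. exists (Rmin d1 d2). split; [apply Rmin_pos; assumption|].
    intros x [Hx | Hx] y Hy Hyx; [apply H1 | apply H2]; try assumption;
      intros i Hi; eapply Rlt_le_trans; [apply Hyx, Hi | apply Rmin_l | apply Hyx, Hi | apply Rmin_r].
  - intros z Hz. destruct (Hc z Hz (eps / 2) ltac:(lra)) as [delta [Hd H]].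
    exists (delta / 2). split; [lra|]. exists (delta / 2). split; [lra|].
    intros x [Hx Hxz] y Hy Hyx.
    assert (Hfy : Cmod (Csub (f y) (f z)) < eps / 2).
    { apply H; [exact Hy|]. intros i Hi. specialize (Hxz i Hi). specialize (Hyx i Hi).
      replace (nth i y 0 - nth i z 0) with ((nth i y 0 - nth i x 0) + (nth i x 0 - nth i z 0)) by ring.
      eapply Rle_lt_trans; [apply Rabs_triang | lra]. }
    assert (Hfx : Cmod (Csub (f x) (f z)) < eps / 2)
      by (apply H; [exact Hx | intros i Hi; specialize (Hxz i Hi); lra]).
    rewrite Cmod_Csub_sym in Hfx. pose proof (Cmod_Csub_triangle (f y) (f z) (f x)). lra.
Qed.

Lemma contT_bounded_on_cube d f : contT d f -> exists B, forall x, in_cube d x -> Cmod (f x) <= B.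
Proof.
  intros [Hc _]. apply (cube_compactness d (fun A => exists B, forall x, A x -> Cmod (f x) <= B)).
  - intros A A' HA [B H]. exists B. intros x Hx. apply H, HA, Hx.
  - exists 0. intros x [].
  - intros A A' [B H] [B' H']. exists (Rmax B B'). intros x [Hx | Hx].
    + eapply Rle_trans; [apply H, Hx | apply Rmax_l].
    + eapply Rle_trans; [apply H', Hx | apply Rmax_r].
  - intros z Hz. destruct (Hc z Hz 1 ltac:(lra)) as [delta [Hd H]].
    exists delta. split; [exact Hd|]. exists (Cmod (f z) + 1). intros x [Hx Hxz].
    pose proof (H x Hx Hxz).
    replace (f x) with (Cadd (Csub (f x) (f z)) (f z)) by Cpx_ring.
    eapply Rle_trans; [apply Cmod_triangle | lra].
Qed.

Lemma contT_close_mod_period d f eps : contT d f -> 0 < eps ->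
  exists delta, 0 < delta <= PI /\ forall x, in_cube d x -> forall y, length y = d ->
  (forall i, (i < d)%nat -> exists n : Z, Rabs (nth i y 0 - nth i x 0 - 2 * PI * IZR n) < delta) ->
  Cmod (Csub (f y) (f x)) < eps.
Proof.
  intros Hf He. destruct (contT_uniformly_close_on_cube d f eps Hf He) as [delta [Hd H]].
  pose proof PI_RGT_0.
  exists (Rmin delta PI). split; [split; [apply Rmin_pos; lra | apply Rmin_r]|].
  intros x Hx y Hy Hn.
  assert (Hn' : forall i, exists n : Z, (i < d)%nat ->
                  Rabs (nth i y 0 - nth i x 0 - 2 * PI * IZR n) < Rmin delta PI).
  { intro i. destruct (lt_dec i d) as [Hi | Hi].
    - destruct (Hn i Hi) as [n Hin]. exists n. intros _. exact Hin.
    - exists 0%Z. intro; contradiction. }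
  destruct (choice _ Hn') as [n Hnf].
  rewrite <- (contT_zshift d f Hf y (fun i => Z.opp (n i))) by exact Hy.
  apply H; [exact Hx | apply zshift_length|]. intros i Hi. rewrite nth_zshift, opp_IZR by exact Hi.
  specialize (Hnf i Hi). pose proof (Rmin_l delta PI).
  replace (nth i y 0 + 2 * PI * - IZR (n i) - nth i x 0)
    with (nth i y 0 - nth i x 0 - 2 * PI * IZR (n i)) by ring.
  lra.
Qed.

(** * A positive summability kernel *)

Definition kernel1 (M : nat) (t : R) : R := ((1 + cos t) / 2) ^ M.

(* Fourier coefficients of [kernel1 M], from [(1 + cos t) / 2 = 1/2 + e^{it}/4 + e^{-it}/4]. *)
Fixpoint kernel1_coefs (M : nat) : list (Z * Cpx) :=
  match M with
  | O => [(0%Z, (1, 0))]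
  | S M' => map (fun p => (fst p, Cscale (1 / 2) (snd p))) (kernel1_coefs M') ++
            map (fun p => ((fst p + 1)%Z, Cscale (1 / 4) (snd p))) (kernel1_coefs M') ++
            map (fun p => ((fst p - 1)%Z, Cscale (1 / 4) (snd p))) (kernel1_coefs M')
  end.

Lemma kernel1_expand M t :
  Csum (map (fun p => Cmul (snd p) (Cexpi (IZR (fst p) * t))) (kernel1_coefs M)) = (kernel1 M t, 0).
Proof.
  induction M as [|M IH].
  - unfold kernel1; simpl. rewrite Rmult_0_l, Cexpi_0. Cpx_ring.
  - simpl kernel1_coefs. rewrite !map_app, !Csum_app, !map_map. cbn [fst snd].
    rewrite (Csum_ext _ (fun p => Cscale (1 / 2) (Cmul (snd p) (Cexpi (IZR (fst p) * t)))))
      by (intros; Cpx_ring).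
    rewrite (Csum_ext (fun p => Cmul (Cscale (1 / 4) (snd p)) (Cexpi (IZR (fst p + 1) * t)))
      (fun p => Cmul (Cscale (1 / 4) (Cmul (snd p) (Cexpi (IZR (fst p) * t)))) (Cexpi t)))
      by (intros p _; rewrite plus_IZR, Rmult_plus_distr_r, Rmult_1_l, Cexpi_add; Cpx_ring).
    rewrite (Csum_ext (fun p => Cmul (Cscale (1 / 4) (snd p)) (Cexpi (IZR (fst p - 1) * t)))
      (fun p => Cmul (Cscale (1 / 4) (Cmul (snd p) (Cexpi (IZR (fst p) * t)))) (Cexpi (- t))))
      by (intros p _; rewrite minus_IZR;
          replace ((IZR (fst p) - 1) * t) with (IZR (fst p) * t + - t) by ring;
          rewrite Cexpi_add; Cpx_ring).
    rewrite !Csum_map_mul_r, !Csum_map_Cscale_r, IH. unfold kernel1. simpl pow.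
    unfold Cexpi. rewrite cos_neg, sin_neg. unfold Cscale, Cmul, Cadd; simpl. f_equal; field.
Qed.

Lemma kernel1_coefs_bound M p : In p (kernel1_coefs M) -> (Z.abs (fst p) <= Z.of_nat M)%Z.
Proof.
  revert p; induction M as [|M IH]; intros p Hp; simpl in Hp.
  - destruct Hp as [<- | []]. simpl; lia.
  - rewrite !in_app_iff, !in_map_iff in Hp.
    destruct Hp as [[q [<- Hq]] | [[q [<- Hq]] | [q [<- Hq]]]]; specialize (IH q Hq); simpl; lia.
Qed.

Lemma kernel1_unit_interval M t : 0 <= kernel1 M t <= 1.
Proof.
  unfold kernel1. pose proof (COS_bound t).
  split; [apply pow_le; lra|].
  apply Rle_trans with (1 ^ M); [apply pow_incr; lra | rewrite pow1; lra].
Qed.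

Lemma kernel1_0 M : kernel1 M 0 = 1.
Proof. unfold kernel1. rewrite cos_0. replace ((1 + 1) / 2) with 1 by field. apply pow1. Qed.

Lemma kernel1_far M t delta : 0 < delta <= PI ->
  (forall n : Z, delta <= Rabs (t - 2 * PI * IZR n)) -> kernel1 M t <= ((1 + cos delta) / 2) ^ M.
Proof.
  intros Hd H. unfold kernel1. apply pow_incr. pose proof PI_RGT_0. pose proof (COS_bound t).
  set (n0 := Zfloor ((t + PI) / (2 * PI))). set (t' := t - 2 * PI * IZR n0).
  pose proof (Zfloor_bound ((t + PI) / (2 * PI))) as Hfl. fold n0 in Hfl.
  assert (E : t + PI = (t + PI) / (2 * PI) * (2 * PI)) by (field; lra).
  assert (Ht' : - PI <= t' < PI) by (unfold t'; split; nra).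
  assert (Hc : cos t = cos t').
  { replace t with (t' + 2 * PI * IZR n0) at 1 by (unfold t'; ring).
    exact (f_equal fst (Cexpi_period t' n0)). }
  specialize (H n0). fold t' in H.
  assert (cos t' <= cos delta).
  { destruct (Rle_dec 0 t').
    - rewrite Rabs_right in H by lra. apply cos_decr_1; lra.
    - rewrite Rabs_left in H by lra. rewrite <- (cos_neg t'). apply cos_decr_1; lra. }
  lra.
Qed.

Definition kernel1_mean (M : nat) : R :=
  fst (Csum (map (fun p => if Z.eq_dec (fst p) 0 then snd p else (0, 0)) (kernel1_coefs M))).

(* On a grid finer than the degree of the kernel, its Riemann sums are exact. *)
Lemma Rsum_kernel1_grid M N t : (M < N)%nat ->
  Rsum (map (fun s => kernel1 M (t - 2 * PI * INR s / INR N)) (seq 0 N)) = INR N * kernel1_mean M.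
Proof.
  intro HN.
  assert (E : (Rsum (map (fun s => kernel1 M (t - 2 * PI * INR s / INR N)) (seq 0 N)), 0) =
     Csum (map (fun p => Cmul (Cmul (snd p) (Cexpi (IZR (fst p) * t))) (root_unity_sum N (- fst p)))
               (kernel1_coefs M))).
  { rewrite <- (Csum_real (fun s => kernel1 M (t - 2 * PI * INR s / INR N))).
    rewrite (Csum_ext _ (fun s => Csum (map (fun p => Cmul (snd p)
               (Cexpi (IZR (fst p) * (t - 2 * PI * INR s / INR N)))) (kernel1_coefs M))))
      by (intros; rewrite kernel1_expand; reflexivity).
    rewrite Csum_map_swap. apply Csum_ext. intros p _. unfold root_unity_sum.
    rewrite <- Csum_map_mul_l. apply Csum_ext. intros s _. rewrite opp_IZR.
    replace (IZR (fst p) * (t - 2 * PI * INR s / INR N))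
      with (IZR (fst p) * t + - IZR (fst p) * (2 * PI * INR s / INR N)) by ring.
    rewrite Cexpi_add. Cpx_ring. }
  apply (f_equal fst) in E. cbn [fst] in E. rewrite E, fst_Csum.
  unfold kernel1_mean. rewrite fst_Csum, <- Rsum_map_mult_l. apply Rsum_ext. intros [n c] Hp.
  pose proof (kernel1_coefs_bound M _ Hp). cbn [fst snd] in *.
  rewrite root_unity_sum_eq by lia.
  destruct (Z.eq_dec (- n) 0); destruct (Z.eq_dec n 0); try lia; [|simpl; ring].
  subst n. rewrite Rmult_0_l, Cexpi_0. simpl. ring.
Qed.

Lemma kernel1_mean_lb M : / (INR M + 1) <= kernel1_mean M.
Proof.
  pose proof (Rsum_kernel1_grid M (S M) 0 ltac:(lia)) as H.
  rewrite <- cons_seq in H. cbn [map] in H. change (Rsum (?a :: ?l)) with (a + Rsum l) in H.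
  replace (kernel1 M (0 - 2 * PI * INR 0 / INR (S M))) with 1 in H
    by (rewrite <- (kernel1_0 M); f_equal; simpl; unfold Rdiv; ring).
  assert (Hs : 0 <= Rsum (map (fun s => kernel1 M (0 - 2 * PI * INR s / INR (S M))) (seq 1 M)))
    by (apply Rsum_nonneg; intros; apply kernel1_unit_interval).
  rewrite S_INR in H, Hs. pose proof (pos_INR M).
  apply (Rmult_le_reg_l (INR M + 1)); [lra|]. rewrite Rinv_r by lra. lra.
Qed.

Lemma kernel1_mean_pos M : 0 < kernel1_mean M.
Proof.
  eapply Rlt_le_trans; [|apply kernel1_mean_lb].
  apply Rinv_0_lt_compat. pose proof (pos_INR M). lra.
Qed.

Definition kernel (M : nat) (x y : list R) : R :=
  Rprod (map (fun p => kernel1 M (fst p - snd p)) (combine x y)).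

Lemma kernel_unit_interval M x y : 0 <= kernel M x y <= 1.
Proof.
  assert (H : forall r, In r (map (fun p => kernel1 M (fst p - snd p)) (combine x y)) -> 0 <= r <= 1).
  { intros r Hr. apply in_map_iff in Hr. destruct Hr as [p [<- _]]. apply kernel1_unit_interval. }
  split; [apply Rprod_nonneg; intros; apply H | apply Rprod_le_1]; assumption.
Qed.

Lemma kernel_far d M x y i delta : length x = d -> length y = d -> (i < d)%nat -> 0 < delta <= PI ->
  (forall n : Z, delta <= Rabs (nth i x 0 - nth i y 0 - 2 * PI * IZR n)) ->
  kernel M x y <= ((1 + cos delta) / 2) ^ M.
Proof.
  intros Hx Hy Hi Hd H. apply (Rprod_le_factor _ (kernel1 M (nth i x 0 - nth i y 0))).
  - apply in_map_iff. exists (nth i x 0, nth i y 0). split; [reflexivity|].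
    rewrite <- combine_nth by lia. apply nth_In. rewrite length_combine. lia.
  - intros r Hr. apply in_map_iff in Hr. destruct Hr as [p [<- _]]. apply kernel1_unit_interval.
  - apply kernel1_far; assumption.
Qed.

Lemma combine_map_r {A B C : Type} (g : B -> C) (x : list A) (j : list B) :
  combine x (map g j) = map (fun p => (fst p, g (snd p))) (combine x j).
Proof. revert j; induction x as [|a x IH]; intros [|b j]; simpl; [..| rewrite IH]; reflexivity. Qed.

Lemma Rsum_kernel_grid d M N x : length x = d -> (M < N)%nat ->
  Rsum (map (fun j => kernel M x (grid N j)) (lbox d (seq 0 N))) = (INR N * kernel1_mean M) ^ d.
Proof.
  intros Hx HN. set (fs := map (fun xi s => kernel1 M (xi - 2 * PI * INR s / INR N)) x).
  rewrite (Rsum_ext _ (fun j => Rprod (zapp fs j))).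
  2:{ intros j _. unfold kernel, grid, fs. rewrite zapp_map, combine_map_r, map_map. reflexivity. }
  replace d with (length fs) by (unfold fs; rewrite length_map; exact Hx).
  rewrite Rsum_lbox_prod. unfold fs. rewrite map_map, length_map.
  rewrite (map_ext _ (fun _ => INR N * kernel1_mean M)) by (intro; apply Rsum_kernel1_grid, HN).
  apply Rprod_const.
Qed.

Lemma Cprod_zapp_Cexpi_dot x y l : length x = length l -> length y = length l ->
  Cprod (zapp (map (fun p (q : Z * Cpx) => Cmul (snd q) (Cexpi (IZR (fst q) * (fst p - snd p))))
                   (combine x y)) l) =
  Cmul (Cprod (map snd l)) (Cexpi (dot (map fst l) x - dot (map fst l) y)).
Proof.
  revert x y; induction l as [|q l IH]; intros [|a x] [|b y] Hx Hy; simpl in *; try lia.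
  - unfold zapp, Cprod, dot; simpl. rewrite Rminus_0_r, Cexpi_0. Cpx_ring.
  - unfold zapp in *. simpl. unfold Cprod in *. simpl. rewrite IH by lia.
    unfold dot. simpl.
    match goal with |- context [Cexpi (?u + ?s - (?v + ?s'))] =>
      replace (u + s - (v + s')) with (IZR (fst q) * (a - b) + (s - s')) by ring end.
    rewrite Cexpi_add. Cpx_ring.
Qed.

Lemma kernel_expand d M x y : length x = d -> length y = d ->
  (kernel M x y, 0) =
  Csum (map (fun l => Cmul (Cprod (map snd l)) (Cexpi (dot (map fst l) x - dot (map fst l) y)))
            (lbox d (kernel1_coefs M))).
Proof.
  intros Hx Hy.
  set (fs := map (fun p (q : Z * Cpx) => Cmul (snd q) (Cexpi (IZR (fst q) * (fst p - snd p)))) (combine x y)).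
  assert (Hfs : length fs = d) by (unfold fs; rewrite length_map, length_combine; lia).
  rewrite (Csum_ext _ (fun l => Cprod (zapp fs l))).
  2:{ intros l Hl. apply In_lbox_length in Hl. symmetry. apply Cprod_zapp_Cexpi_dot; lia. }
  rewrite <- Hfs at 1. rewrite Csum_lbox_prod. unfold fs. rewrite map_map.
  unfold kernel. rewrite <- Cprod_real, map_map. f_equal. apply map_ext. intro p.
  rewrite kernel1_expand. reflexivity.
Qed.

Lemma linear_geom_bounded s : 0 <= s < 1 -> exists C, forall M, (INR M + 1) * s ^ M <= C.
Proof.
  intro Hs. set (s' := (1 + s) / 2). assert (Hs' : 1 / 2 <= s' < 1) by (unfold s'; lra).
  set (h := / s' - 1).
  assert (Hh : 0 < h).
  { unfold h. assert (1 < / s') by (rewrite <- Rinv_1; apply Rinv_lt_contravar; lra). lra. }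
  exists (1 + / h). intro M.
  assert (E : s' ^ M * (1 + h) ^ M = 1).
  { rewrite <- Rpow_mult_distr. unfold h. replace (s' * (1 + (/ s' - 1))) with 1 by (field; lra).
    apply pow1. }
  pose proof (Rcomplements.Rle_pow_lin h M (Rlt_le _ _ Hh)). pose proof (pos_INR M).
  assert (0 <= s' ^ M) by (apply pow_le; lra).
  assert (s ^ M <= s' ^ M) by (apply pow_incr; unfold s'; lra).
  assert (0 < / h) by (apply Rinv_0_lt_compat, Hh).
  assert (s' ^ M * (1 + INR M * h) <= 1) by nra.
  assert (INR M + 1 <= (1 + / h) * (1 + INR M * h)).
  { replace ((1 + / h) * (1 + INR M * h)) with (1 + INR M * h + / h + INR M) by (field; lra). nra. }
  nra.
Qed.

Lemma poly_geom_small d : forall q, 0 <= q < 1 -> forall eps, 0 < eps ->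
  exists M0, forall M, (M >= M0)%nat -> (INR M + 1) ^ d * q ^ M <= eps.
Proof.
  induction d as [|d IH]; intros q Hq e He.
  - destruct (pow_lt_1_zero q ltac:(rewrite Rabs_right; lra) e He) as [M0 HM0].
    exists M0. intros M HM. specialize (HM0 M HM). simpl. rewrite Rmult_1_l.
    pose proof (Rle_abs (q ^ M)). lra.
  - set (r := sqrt q).
    assert (Hr : 0 <= r < 1).
    { unfold r. split; [apply sqrt_pos|]. rewrite <- sqrt_1. apply sqrt_lt_1; lra. }
    destruct (linear_geom_bounded r Hr) as [C HC].
    assert (HC1 : 1 <= C) by (specialize (HC 0%nat); simpl in HC; lra).
    destruct (IH r Hr (e / C) ltac:(apply Rdiv_lt_0_compat; lra)) as [M0 HM0].
    exists M0. intros M HM. specialize (HM0 M HM). specialize (HC M).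
    replace (q ^ M) with (r ^ M * r ^ M) by (rewrite <- Rpow_mult_distr; unfold r; rewrite sqrt_sqrt; lra).
    assert (0 <= (INR M + 1) * r ^ M)
      by (apply Rmult_le_pos; [pose proof (pos_INR M); lra | apply pow_le; lra]).
    assert (0 <= (INR M + 1) ^ d * r ^ M) by (apply Rmult_le_pos; apply pow_le; [pose proof (pos_INR M)|]; lra).
    replace ((INR M + 1) ^ S d * (r ^ M * r ^ M)) with (((INR M + 1) * r ^ M) * ((INR M + 1) ^ d * r ^ M))
      by (simpl; ring).
    replace e with (C * (e / C)) by (field; lra).
    apply Rmult_le_compat; assumption.
Qed.

(** * Approximation by kernel averages and uniqueness *)

Definition kernel_avg (d N M : nat) (f : list R -> Cpx) (x : list R) : Cpx :=
  Cscale (/ (INR N ^ d))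
    (Csum (map (fun j => Cscale (kernel M x (grid N j)) (f (grid N j))) (lbox d (seq 0 N)))).

Lemma kernel_avg_expand d N M f x : length x = d ->
  kernel_avg d N M f x =
  Csum (map (fun l => Cmul (Cmul (Cprod (map snd l)) (Cexpi (dot (map fst l) x)))
                           (riemann_coef d N f (map fst l))) (lbox d (kernel1_coefs M))).
Proof.
  intro Hx. unfold kernel_avg, riemann_coef.
  rewrite (Csum_ext _ (fun j => Csum (map (fun l => Cmul (Cmul (Cprod (map snd l)) (Cexpi (dot (map fst l) x)))
        (Cmul (f (grid N j)) (Cexpi (- dot (map fst l) (grid N j))))) (lbox d (kernel1_coefs M))))).
  2:{ intros j Hj. apply In_lbox_length in Hj.
      replace (Cscale (kernel M x (grid N j)) (f (grid N j)))
        with (Cmul (f (grid N j)) (kernel M x (grid N j), 0))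
        by Cpx_ring.
      rewrite (kernel_expand d) by (rewrite ?grid_length; assumption).
      rewrite <- Csum_map_mul_l. apply Csum_ext. intros l _.
      unfold Rminus. rewrite Cexpi_add. Cpx_ring. }
  rewrite Csum_map_swap, <- Csum_map_Cscale_r. apply Csum_ext. intros l _.
  rewrite Csum_map_mul_l. Cpx_ring.
Qed.

(* Near the diagonal (modulo periods) use continuity, away from it the smallness of the kernel. *)
Lemma kernel_term_le d M f B e delta x y : length x = d -> length y = d -> 0 <= e -> 0 < delta <= PI ->
  ((forall i, (i < d)%nat -> exists n : Z, Rabs (nth i y 0 - nth i x 0 - 2 * PI * IZR n) < delta) ->
   Cmod (Csub (f y) (f x)) < e) ->
  Cmod (f x) <= B -> Cmod (f y) <= B ->
  Cmod (Cscale (kernel M x y) (Csub (f x) (f y))) <= e * kernel M x y + 2 * B * ((1 + cos delta) / 2) ^ M.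
Proof.
  intros Hx Hy He Hd Hnear HBx HBy.
  pose proof (kernel_unit_interval M x y) as HK. pose proof (Cmod_ge_0 (f x)).
  assert (Hq : 0 <= ((1 + cos delta) / 2) ^ M) by (apply pow_le; pose proof (COS_bound delta); lra).
  rewrite Cmod_Cscale, Rabs_right by lra.
  destruct (classic (forall i, (i < d)%nat ->
              exists n : Z, Rabs (nth i y 0 - nth i x 0 - 2 * PI * IZR n) < delta)) as [Hn | Hn].
  - specialize (Hnear Hn). rewrite Cmod_Csub_sym. nra.
  - apply not_all_ex_not in Hn. destruct Hn as [i Hi]. apply imply_to_and in Hi. destruct Hi as [Hi Hn].
    assert (Hfar : forall n : Z, delta <= Rabs (nth i x 0 - nth i y 0 - 2 * PI * IZR n)).
    { intro n. apply Rnot_lt_le. intro Hlt. apply Hn. exists (Z.opp n). rewrite opp_IZR.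
      rewrite <- Rabs_Ropp. replace (- (nth i y 0 - nth i x 0 - 2 * PI * - IZR n))
        with (nth i x 0 - nth i y 0 - 2 * PI * IZR n) by ring. exact Hlt. }
    pose proof (kernel_far d M x y i delta Hx Hy Hi Hd Hfar).
    pose proof (Cmod_Csub_le (f x) (f y)). pose proof (Cmod_ge_0 (Csub (f x) (f y))).
    assert (kernel M x y * Cmod (Csub (f x) (f y)) <= ((1 + cos delta) / 2) ^ M * (2 * B))
      by (apply Rmult_le_compat; lra).
    nra.
Qed.

Lemma kernel_avg_defect d N M f x : length x = d -> (M < N)%nat ->
  Csub (f x) (Cscale (/ (kernel1_mean M ^ d)) (kernel_avg d N M f x)) =
  Cscale (/ ((INR N * kernel1_mean M) ^ d))
    (Csum (map (fun j => Cscale (kernel M x (grid N j)) (Csub (f x) (f (grid N j)))) (lbox d (seq 0 N)))).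
Proof.
  intros Hx HN. pose proof (kernel1_mean_pos M). assert (0 < INR N) by (apply lt_0_INR; lia).
  assert (0 < INR N ^ d) by (apply pow_lt; lra). assert (0 < kernel1_mean M ^ d) by (apply pow_lt; lra).
  rewrite (Csum_ext _ (fun j => Csub (Cscale (kernel M x (grid N j)) (f x))
                                     (Cscale (kernel M x (grid N j)) (f (grid N j)))))
    by (intros; Cpx_ring).
  rewrite Csum_map_sub, (Csum_map_Cscale_l (fun j => kernel M x (grid N j))), Rsum_kernel_grid by assumption.
  unfold kernel_avg. rewrite Rpow_mult_distr.
  unfold Csub, Cscale; cbn [fst snd]. f_equal; field; lra.
Qed.

Lemma inv_kernel1_mean_pow_le d M : / kernel1_mean M ^ d <= (INR M + 1) ^ d.
Proof.
  pose proof (kernel1_mean_lb M). pose proof (kernel1_mean_pos M). pose proof (pos_INR M).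
  rewrite <- pow_inv. apply pow_incr. split; [apply Rlt_le, Rinv_0_lt_compat; lra|].
  rewrite <- (Rinv_inv (INR M + 1)). apply Rinv_le_contravar; [apply Rinv_0_lt_compat; lra | assumption].
Qed.

Lemma Cmod_kernel_avg_defect_le d f M N B e delta x :
  in_cube d x -> (M < N)%nat -> 0 <= e -> 0 < delta <= PI ->
  (forall y, in_cube d y -> Cmod (f y) <= B) ->
  (forall y, in_cube d y ->
     (forall i, (i < d)%nat -> exists n : Z, Rabs (nth i y 0 - nth i x 0 - 2 * PI * IZR n) < delta) ->
     Cmod (Csub (f y) (f x)) < e) ->
  Cmod (Csub (f x) (Cscale (/ (kernel1_mean M ^ d)) (kernel_avg d N M f x))) <=
  e + 2 * B * ((1 + cos delta) / 2) ^ M * (INR M + 1) ^ d.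
Proof.
  intros Hx HN He Hd HB Hnear.
  rewrite kernel_avg_defect by (try apply Hx; exact HN).
  pose proof (inv_kernel1_mean_pow_le d M) as Hinv.
  pose proof (kernel1_mean_pos M) as Hc. set (c := kernel1_mean M) in *.
  set (q := (1 + cos delta) / 2).
  assert (Hq : 0 <= q ^ M) by (apply pow_le; unfold q; pose proof (COS_bound delta); lra).
  assert (HBpos : 0 <= B) by (eapply Rle_trans; [apply Cmod_ge_0 | apply HB, Hx]).
  assert (HN0 : 0 < INR N) by (apply lt_0_INR; lia).
  assert (HNc : 0 < (INR N * c) ^ d) by (apply pow_lt; nra).
  rewrite Cmod_Cscale, Rabs_right by (apply Rle_ge, Rlt_le, Rinv_0_lt_compat, HNc).
  apply Rle_trans with (/ (INR N * c) ^ d * (e * (INR N * c) ^ d + 2 * B * q ^ M * INR N ^ d)).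
  - apply Rmult_le_compat_l; [apply Rlt_le, Rinv_0_lt_compat, HNc|].
    eapply Rle_trans; [apply Cmod_Csum_le|].
    eapply Rle_trans; [apply (Rsum_le _ (fun j => e * kernel M x (grid N j) + 2 * B * q ^ M))|].
    + intros j Hj. pose proof (grid_in_cube d N j Hj) as Hy.
      apply (kernel_term_le d); try apply Hx; try apply Hy; try assumption.
      * intro Hn. apply Hnear; [exact Hy | exact Hn].
      * apply HB, Hx.
      * apply HB, Hy.
    + rewrite Rsum_map_add, Rsum_map_mult_l, Rsum_kernel_grid by (try apply Hx; exact HN).
      rewrite Rsum_const, length_lbox, length_seq, pow_INR. fold c. right. ring.
  - replace (/ (INR N * c) ^ d * (e * (INR N * c) ^ d + 2 * B * q ^ M * INR N ^ d))
      with (e + 2 * B * q ^ M * / c ^ d)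
      by (rewrite Rpow_mult_distr; field; split; apply pow_nonzero; lra).
    assert (2 * B * q ^ M * / c ^ d <= 2 * B * q ^ M * (INR M + 1) ^ d)
      by (apply Rmult_le_compat_l; [nra | exact Hinv]).
    lra.
Qed.

Theorem kernel_avg_approx d f : contT d f -> forall eps, 0 < eps -> exists M0, forall M N,
  (M >= M0)%nat -> (M < N)%nat -> forall x, in_cube d x ->
  Cmod (Csub (f x) (Cscale (/ (kernel1_mean M ^ d)) (kernel_avg d N M f x))) <= eps.
Proof.
  intros Hf e He.
  destruct (contT_bounded_on_cube d f Hf) as [B0 HB0]. set (B := Rmax B0 0).
  assert (HB : forall x, in_cube d x -> Cmod (f x) <= B)
    by (intros; eapply Rle_trans; [apply HB0; assumption | apply Rmax_l]).
  assert (HBpos : 0 <= B) by apply Rmax_r.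
  destruct (contT_close_mod_period d f (e / 2) Hf ltac:(lra)) as [delta [Hd Hnear]].
  set (q := (1 + cos delta) / 2).
  assert (Hq : 0 <= q < 1).
  { unfold q. pose proof (COS_bound delta). pose proof PI_RGT_0.
    assert (cos delta < cos 0) by (apply cos_decreasing_1; lra). rewrite cos_0 in *. lra. }
  destruct (poly_geom_small d q Hq (e / (2 * (2 * B + 1))) ltac:(apply Rdiv_lt_0_compat; lra))
    as [M0 HM0].
  exists M0. intros M N HM HN x Hx.
  eapply Rle_trans; [apply (Cmod_kernel_avg_defect_le d f M N B (e / 2) delta); try assumption; try lra|].
  - intros y Hy Hn. apply Hnear; [exact Hx | apply Hy | exact Hn].
  - specialize (HM0 M HM). fold q.
    assert (2 * B * (q ^ M * (INR M + 1) ^ d) <= 2 * B * (e / (2 * (2 * B + 1))))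
      by (apply Rmult_le_compat_l; [lra | rewrite Rmult_comm; exact HM0]).
    assert (2 * B * (e / (2 * (2 * B + 1))) <= e / 2).
    { apply (Rmult_le_reg_r (2 * (2 * B + 1))); [lra|]. unfold Rdiv. field_simplify; [nra | lra]. }
    rewrite Rmult_assoc. lra.
Qed.

Definition kernel_trigpoly (d M N : nat) (f : list R -> Cpx) : trigpoly :=
  map (fun l => (map fst l, Cscale (/ (kernel1_mean M ^ d))
                              (Cmul (Cprod (map snd l)) (riemann_coef d N f (map fst l)))))
      (lbox d (kernel1_coefs M)).

Lemma kernel_trigpoly_dim d M N f : trig_dim d (kernel_trigpoly d M N f).
Proof.
  intros mc Hmc. apply in_map_iff in Hmc. destruct Hmc as [l [<- Hl]].
  simpl. rewrite length_map. exact (In_lbox_length _ _ _ Hl).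
Qed.

Lemma trig_eval_kernel_trigpoly d M N f x : length x = d ->
  trig_eval (kernel_trigpoly d M N f) x = Cscale (/ (kernel1_mean M ^ d)) (kernel_avg d N M f x).
Proof.
  intro Hx. rewrite kernel_avg_expand by exact Hx. unfold trig_eval, kernel_trigpoly.
  rewrite map_map, <- Csum_map_Cscale_r. apply Csum_ext. intros l _. simpl. Cpx_ring.
Qed.

(* Riemann sums of [f] are uniformly close to those of a trigonometric polynomial, which
   stabilise; hence they form a Cauchy sequence. *)
Lemma riemann_coef_cv d f k : contT d f -> length k = d ->
  Ccv (fun N => riemann_coef d N f k) (fcoef d f k).
Proof.
  intros Hf Hk.
  destruct (Ccv_Cauchy (fun N => riemann_coef d N f k)) as [L HL].
  - intros e He. destruct (kernel_avg_approx d f Hf (e / 3) ltac:(lra)) as [M HM].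
    set (P := kernel_trigpoly d M (S M) f).
    exists (S (trig_degree P + zmax k)). intros n m Hn Hm.
    set (c := Csum (map (fun mc => if list_eq_dec Z.eq_dec (fst mc) k then snd mc else (0, 0)) P)).
    assert (Hclose : forall N, (N >= S (trig_degree P + zmax k))%nat ->
                     Cmod (Csub (riemann_coef d N f k) c) <= e / 3).
    { intros N HN. unfold c. rewrite <- (riemann_coef_trig_eval d N P k)
        by (try apply kernel_trigpoly_dim; try assumption; lia).
      apply riemann_coef_sub_le; [lia|]. intros j Hj. pose proof (grid_in_cube d N j Hj) as Hy.
      unfold P. rewrite trig_eval_kernel_trigpoly by apply Hy. apply HM; [lia | lia | exact Hy]. }
    pose proof (Hclose n Hn). pose proof (Hclose m Hm) as Hcm. rewrite Cmod_Csub_sym in Hcm.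
    pose proof (Cmod_Csub_triangle (riemann_coef d n f k) c (riemann_coef d m f k)). lra.
  - change (fcoef d f k) with (Clim (fun N => riemann_coef d N f k)).
    rewrite (Clim_eq _ _ HL). exact HL.
Qed.

Lemma kernel_avg_cv d M f x : contT d f -> length x = d ->
  Ccv (fun N => kernel_avg d N M f x)
    (Csum (map (fun l => Cmul (Cmul (Cprod (map snd l)) (Cexpi (dot (map fst l) x)))
                              (fcoef d f (map fst l))) (lbox d (kernel1_coefs M)))).
Proof.
  intros Hf Hx. intros e He.
  assert (H : Ccv (fun N => Csum (map (fun l => Cmul (Cmul (Cprod (map snd l)) (Cexpi (dot (map fst l) x)))
                                      (riemann_coef d N f (map fst l))) (lbox d (kernel1_coefs M))))
    (Csum (map (fun l => Cmul (Cmul (Cprod (map snd l)) (Cexpi (dot (map fst l) x)))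
                              (fcoef d f (map fst l))) (lbox d (kernel1_coefs M))))).
  { apply (Ccv_Csum _ (fun l N => Cmul (Cmul (Cprod (map snd l)) (Cexpi (dot (map fst l) x)))
                                    (riemann_coef d N f (map fst l)))).
    intros l Hl. apply Ccv_Cmul_l, riemann_coef_cv; [exact Hf|].
    rewrite length_map. exact (In_lbox_length _ _ _ Hl). }
  destruct (H e He) as [N HN]. exists N. intros n Hn. rewrite kernel_avg_expand by exact Hx. apply HN, Hn.
Qed.

(* As [N -> oo] the kernel averages only depend on the Fourier coefficients, and they
   approximate both functions. *)
Theorem contT_fcoef_inj d f h : contT d f -> contT d h ->
  (forall k, length k = d -> fcoef d f k = fcoef d h k) -> forall x, length x = d -> f x = h x.
Proof.
  intros Hf Hh Hco x Hx.
  destruct (zshift_in_cube d x Hx) as [n Hn].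
  rewrite <- (contT_zshift d f Hf x n), <- (contT_zshift d h Hh x n) by exact Hx.
  set (x' := zshift d x n) in *.
  assert (Hsmall : forall e, 0 < e -> Cmod (Csub (f x') (h x')) <= 2 * e).
  { intros e He. destruct (kernel_avg_approx d f Hf e He) as [M1 HM1].
    destruct (kernel_avg_approx d h Hh e He) as [M2 HM2].
    set (M := Nat.max M1 M2).
    set (G := Cscale (/ kernel1_mean M ^ d)
                (Csum (map (fun l => Cmul (Cmul (Cprod (map snd l)) (Cexpi (dot (map fst l) x')))
                                          (fcoef d f (map fst l))) (lbox d (kernel1_coefs M))))).
    assert (Hclose : forall u M0, contT d u -> (forall k, length k = d -> fcoef d u k = fcoef d f k) ->
      (M >= M0)%nat ->
      (forall M N, (M >= M0)%nat -> (M < N)%nat -> forall x, in_cube d x ->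
         Cmod (Csub (u x) (Cscale (/ (kernel1_mean M ^ d)) (kernel_avg d N M u x))) <= e) ->
      Cmod (Csub (u x') G) <= e).
    { intros u M0 Hu Hcoef HM0 Happrox.
      replace G with (Cscale (/ kernel1_mean M ^ d)
                (Csum (map (fun l => Cmul (Cmul (Cprod (map snd l)) (Cexpi (dot (map fst l) x')))
                                          (fcoef d u (map fst l))) (lbox d (kernel1_coefs M))))).
      - apply (Ccv_Cmod_Csub_le _ _ _ _ (Ccv_Cscale _ _ _ (kernel_avg_cv d M u x' Hu (proj1 Hn)))).
        exists (S M). intros N HN. apply Happrox; [lia | lia | exact Hn].
      - unfold G. f_equal. apply Csum_ext. intros l Hl. rewrite Hcoef; [reflexivity|].
        rewrite length_map. exact (In_lbox_length _ _ _ Hl). }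
    pose proof (Hclose f M1 Hf (fun _ _ => eq_refl) ltac:(lia) HM1).
    pose proof (Hclose h M2 Hh (fun k Hk => eq_sym (Hco k Hk)) ltac:(lia) HM2) as Hh'.
    rewrite Cmod_Csub_sym in Hh'. pose proof (Cmod_Csub_triangle (f x') G (h x')). lra. }
  assert (Hzero : Cmod (Csub (f x') (h x')) = 0).
  { apply Rle_antisym; [|apply Cmod_ge_0]. apply Rnot_lt_le. intro Hlt.
    specialize (Hsmall (Cmod (Csub (f x') (h x')) / 4) ltac:(lra)). lra. }
  apply Cmod_eq_0 in Hzero. injection Hzero as H1 H2.
  apply injective_projections; lra.
Qed.

Lemma supnorm_le_normS psi d g f : admissible psi -> in_S psi d g -> contT d f ->
  (forall k, length k = d -> fcoef d f k = g k) -> supnorm d f <= normS psi d g.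
Proof.
  intros Hpsi HS Hf Hco. destruct (besov_embedding psi d g Hpsi HS) as (HF & HcoF & _).
  apply supnorm_le. intros x Hx.
  rewrite (contT_fcoef_inj d f (dyadic_sum psi d g) Hf HF) by (try intros k Hk; rewrite ?Hco, ?HcoF; auto).
  apply Cmod_dyadic_sum_le; assumption.
Qed.

Definition zeros (d : nat) : list Z := repeat 0%Z d.

Definition one_coef (d : nat) (k : list Z) : Cpx :=
  if list_eq_dec Z.eq_dec k (zeros d) then (1, 0) else (0, 0).

Definition one_fun : list R -> Cpx := fun _ => (1, 0).

Lemma zeros_In_zbox d N : In (zeros d) (zbox d N).
Proof.
  apply In_lbox. split; [apply repeat_length|].
  intros z Hz. apply repeat_spec in Hz. subst. apply In_zrange. lia.
Qed.

Lemma dot_zeros d x : dot (zeros d) x = 0.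
Proof.
  unfold zeros. revert x; induction d as [|d IH]; intros [|a x]; unfold dot in *; simpl;
    try rewrite IH; ring.
Qed.

Lemma A_partial_one_coef d N : A_partial d (one_coef d) N = 1.
Proof.
  unfold A_partial.
  rewrite (Rsum_ext _ (fun k => fst (if list_eq_dec Z.eq_dec k (zeros d) then (1, 0) else (0, 0))))
    by (intros k _; unfold one_coef; destruct list_eq_dec; simpl; [apply Cmod_1 | apply Cmod_0]).
  rewrite <- fst_Csum, (Csum_delta (list_eq_dec Z.eq_dec) (fun _ => (1, 0)));
    [reflexivity | apply NoDup_zbox | apply zeros_In_zbox].
Qed.

Lemma in_A_one_coef d : in_A d (one_coef d).
Proof. exists 1. intros r [N ->]. rewrite A_partial_one_coef. lra. Qed.

Lemma normA_one_coef d : normA d (one_coef d) = 1.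
Proof.
  apply Rle_antisym.
  - apply Rsup_le; [exists 1, 0%nat; rewrite A_partial_one_coef; reflexivity|].
    intros r [N ->]. rewrite A_partial_one_coef. lra.
  - rewrite <- (A_partial_one_coef d 0). apply A_partial_le_normA, in_A_one_coef.
Qed.

Lemma lbox_seq_0_1 d : lbox d (seq 0 1) = [repeat 0%nat d].
Proof. change (seq 0 1) with [0%nat]. induction d as [|d IH]; simpl; [|rewrite IH]; reflexivity. Qed.

Lemma phiprod_zeros psi d : admissible psi -> phiprod psi (repeat 0%nat d) (zeros d) = 1.
Proof.
  intros (_ & _ & _ & _ & H1). unfold phiprod, zeros.
  induction d as [|d IH]; simpl; [reflexivity|]. rewrite IH, H1 by lra. ring.
Qed.

Lemma normS_one_coef psi d : admissible psi -> normS psi d (one_coef d) = 1.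
Proof.
  intro Hpsi. destruct (wiener_embedding psi d (one_coef d) Hpsi (in_A_one_coef d)) as [HS Hle].
  rewrite normA_one_coef in Hle. apply Rle_antisym; [exact Hle|].
  eapply Rle_trans; [|apply (S_partial_le_normS psi d (one_coef d) HS 0%nat)].
  unfold S_partial. rewrite lbox_seq_0_1. simpl. rewrite Rplus_0_r.
  eapply Rle_trans;
    [|apply (supnorm_ub d _ (repeat 0 d)); [apply (proj1 (proj2 HS)), repeat_length | apply repeat_length]].
  rewrite (block_eq_partial psi d (one_coef d) Hpsi (repeat 0%nat d) 0%nat)
    by (try apply repeat_length; intros s Hs; apply repeat_spec in Hs; lia).
  unfold block_partial.
  rewrite (Csum_ext _ (fun k => if list_eq_dec Z.eq_dec k (zeros d)
                                then Cscale (phiprod psi (repeat 0%nat d) k) (Cexpi (dot k (repeat 0 d)))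
                                else (0, 0)))
    by (intros k _; unfold one_coef; destruct list_eq_dec; Cpx_ring).
  rewrite (Csum_delta (list_eq_dec Z.eq_dec)
             (fun k => Cscale (phiprod psi (repeat 0%nat d) k) (Cexpi (dot k (repeat 0 d)))));
    [| apply NoDup_zbox | apply zeros_In_zbox].
  rewrite dot_zeros, Cexpi_0.
  rewrite phiprod_zeros by exact Hpsi.
  replace (Cscale 1 (1, 0)) with (1, 0) by Cpx_ring. rewrite Cmod_1. lra.
Qed.

Lemma contT_one_fun d : contT d one_fun.
Proof.
  split; [|reflexivity].
  intros x Hx e He. exists 1. split; [lra|]. intros. unfold one_fun. rewrite Csub_diag, Cmod_0. exact He.
Qed.

Lemma fcoef_one_fun d k : length k = d -> fcoef d one_fun k = one_coef d k.
Proof.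
  intro Hk. apply Clim_eq, Ccv_eventually_const.
  set (P := [(zeros d, (1, 0))] : trigpoly).
  assert (Hdim : trig_dim d P) by (intros mc [<- | []]; apply repeat_length).
  assert (E : one_fun = trig_eval P).
  { apply functional_extensionality. intro x. unfold trig_eval, P, one_fun. simpl.
    rewrite dot_zeros, Cexpi_0. Cpx_ring. }
  exists (S (trig_degree P + zmax k)). intros N HN.
  change (riemann_coef d N one_fun k = one_coef d k).
  rewrite E, (riemann_coef_trig_eval d) by (try assumption; lia).
  unfold P, one_coef. simpl.
  destruct (list_eq_dec Z.eq_dec (zeros d) k); destruct (list_eq_dec Z.eq_dec k (zeros d));
    try congruence; Cpx_ring.
Qed.

Lemma supnorm_one_fun d : supnorm d one_fun = 1.
Proof.
  apply Rle_antisym.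
  - apply supnorm_le. intros. apply Req_le, Cmod_1.
  - rewrite <- Cmod_1. change (Cmod (1, 0)) with (Cmod (one_fun (repeat 0 d))).
    apply supnorm_ub; [|apply repeat_length].
    exists 1. intros r [x [_ ->]]. apply Req_le, Cmod_1.
Qed.

Theorem mainTheorem11 (d : nat) (psi : R -> R) :
  (1 <= d)%nat -> admissible psi ->
  (forall g, in_A d g -> in_S psi d g /\ normS psi d g <= normA d g) /\
  is_lub (fun r => exists g, in_A d g /\ normA d g <= 1 /\ r = normS psi d g) 1 /\
  (forall g, in_S psi d g ->
     exists f, contT d f /\ (forall k, length k = d -> fcoef d f k = g k) /\
               supnorm d f <= normS psi d g) /\
  is_lub (fun r => exists g f, in_S psi d g /\ normS psi d g <= 1 /\
            contT d f /\ (forall k, length k = d -> fcoef d f k = g k) /\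
            r = supnorm d f) 1.
Proof.
  intros _ Hpsi.
  pose proof (proj1 (wiener_embedding psi d (one_coef d) Hpsi (in_A_one_coef d))) as HS0.
  split; [|split; [|split]].
  - intros g Hg. apply wiener_embedding; assumption.
  - split.
    + intros r [g (Hg & Hn & ->)]. pose proof (wiener_embedding psi d g Hpsi Hg). lra.
    + intros b Hb. rewrite <- (normS_one_coef psi d Hpsi). apply Hb.
      exists (one_coef d). rewrite normA_one_coef. split; [apply in_A_one_coef | split; [lra | reflexivity]].
  - intros g Hg. exists (dyadic_sum psi d g). apply besov_embedding; assumption.
  - split.
    + intros r (g & f & HS & Hn & Hf & Hco & ->). pose proof (supnorm_le_normS psi d g f Hpsi HS Hf Hco). lra.
    + intros b Hb. rewrite <- (supnorm_one_fun d). apply Hb.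
      exists (one_coef d), one_fun. rewrite normS_one_coef by exact Hpsi.
      split; [exact HS0|]. split; [lra|]. split; [apply contT_one_fun|].
      split; [apply fcoef_one_fun | reflexivity].
Qed.
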